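(* Let $L\ge2$, let $S=(d,N_1,\dots,N_{L-1},1)$ be a neural network architecture, let $B>0$, and let $\varrho:\mathbb{R}\to\mathbb{R}$. Assume at least one of the following: (i) $N_{L-1}\ge2$ and $\varrho\in C^1(\mathbb{R})\setminus C^\infty(\mathbb{R})$; (ii) $N_{L-1}\ge2$ and $\varrho$ is bounded, analytic, and not constant; (iii) $\varrho$ is approximately homogeneous of order $(r,q)$ for some $r,q\in\mathbb{N}_0$ with $r\ne q$, and $\varrho\in C^{\max\{r,q\}}(\mathbb{R})$. Then $\mathcal{RNN}_\varrho^{[-B,B]^d}(S)$ is not closed in $C([-B,B]^d)$ (with the supremum norm).
   Context: A neural network with architecture $S=(N_0,\dots,N_L)$ ($N_0=d$) is a family $\Phi=((A_\ell,b_\ell))_{\ell=1}^L$, $A_\ell\in\mathbb{R}^{N_\ell\times N_{\ell-1}}$, $b_\ell\in\mathbb{R}^{N_\ell}$; $\mathcal{NN}(S)$ is the set of these. For $\varrho:\mathbb{R}\to\mathbb{R}$ and $\Omega\subset\mathbb{R}^d$, $\mathrm{R}_\varrho^\Omega(\Phi):\Omega\to\mathbb{R}^{N_L}$, $x\mapsto x_L$, where $x_0=x$, $x_\ell=\varrho(A_\ell x_{\ell-1}+b_\ell)$ for $1\le\ell\le L-1$ (componentwise), $x_L=A_Lx_{L-1}+b_L$; $\mathcal{RNN}_\varrho^\Omega(S)=\{\mathrm{R}_\varrho^\Omega(\Phi):\Phi\in\mathcal{NN}(S)\}$. A function $f:\mathbb{R}\to\mathbb{R}$ is approximately homogeneous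 of order $(r,q)\in\mathbb{N}_0^2$ if there is $s>0$ with $|f(x)-x^r|\le s$ for all $x\ge0$ and $|f(x)-x^q|\le s$ for all $x\le0$. *)

From Stdlib Require Import Reals List.
From Coquelicot Require Import Coquelicot.
Open Scope R_scope.

Definition rsum (n : nat) (f : nat -> R) : R :=
  fold_right Rplus 0 (map f (seq 0 n)).

(* Vectors in R^m are encoded as functions nat -> R (only indices < m matter);
   the weights of layer l (1 <= l <= L) are  A l : nat -> nat -> R  (row i, column j,
   only i < N_l, j < N_(l-1) matter) and the biases  b l : nat -> R.
   dims l = N_l.  *)

Fixpoint hidden_out (rho : R -> R) (dims : nat -> nat)
  (A : nat -> nat -> nat -> R) (b : nat -> nat -> R) (l : nat) (x : nat -> R)
  : nat -> R :=
  match l with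
  | O => x
  | S l' => fun i =>
      rho (rsum (dims l') (fun j => A l i j * hidden_out rho dims A b l' x j) + b l i)
  end.

(* Realization of the network with architecture S = (d, N_1, ..., N_(L-1), 1),
   given as  d  and  Ns = [N_1; ...; N_(L-1)]  (so L = length Ns + 1):
   x_L = A_L x_(L-1) + b_L  (a scalar, since N_L = 1). *)
Definition arch_dims (d : nat) (Ns : list nat) (l : nat) : nat := nth l (d :: Ns) 0%nat.

Definition realization (rho : R -> R) (d : nat) (Ns : list nat)
  (A : nat -> nat -> nat -> R) (b : nat -> nat -> R) (x : nat -> R) : R :=
  let L := S (length Ns) in
  let dims := arch_dims d Ns in
  rsum (dims (pred L)) (fun j => A L 0%nat j * hidden_out rho dims A b (pred L) x j)
  + b L 0%nat.

Definition in_cube (d : nat) (B : R) (x : nat -> R) : Prop :=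
  forall i, (i < d)%nat -> - B <= x i <= B.

Definition in_RNN (rho : R -> R) (d : nat) (Ns : list nat) (B : R)
  (f : (nat -> R) -> R) : Prop :=
  exists A b, forall x, in_cube d B x -> f x = realization rho d Ns A b x.

Definition cont_on_cube (d : nat) (B : R) (g : (nat -> R) -> R) : Prop :=
  forall x, in_cube d B x -> forall eps, 0 < eps -> exists delta, 0 < delta /\
    forall y, in_cube d B y -> (forall i, (i < d)%nat -> Rabs (y i - x i) < delta) ->
      Rabs (g y - g x) < eps.

Definition unif_conv_on_cube (d : nat) (B : R) (fs : nat -> (nat -> R) -> R)
  (g : (nat -> R) -> R) : Prop :=
  forall eps, 0 < eps -> exists N, forall n, (N <= n)%nat ->
    forall x, in_cube d B x -> Rabs (fs n x - g x) <= eps.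

(* RNN is not closed in (C([-B,B]^d), sup norm): some g in C([-B,B]^d) is a uniform
   limit of realizations but is not itself a realization
   (C([-B,B]^d) is a metric space, so closed = sequentially closed). *)
Definition RNN_not_closed (rho : R -> R) (d : nat) (Ns : list nat) (B : R) : Prop :=
  exists (fs : nat -> (nat -> R) -> R) (g : (nat -> R) -> R),
    (forall n, in_RNN rho d Ns B (fs n)) /\ cont_on_cube d B g /\
    unif_conv_on_cube d B fs g /\ ~ in_RNN rho d Ns B g.

Definition Ck (k : nat) (f : R -> R) : Prop :=
  (forall m x, (m <= k)%nat -> ex_derive_n f m x) /\
  (forall x, continuous (Derive_n f k) x).

Definition Cinf (f : R -> R) : Prop := forall k, Ck k f.

Definition bounded_fun (f : R -> R) : Prop := exists M, forall x, Rabs (f x) <= M.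

Definition analytic (f : R -> R) : Prop :=
  forall x0, exists (a : nat -> R) (r : R), 0 < r /\
    forall x, Rabs (x - x0) < r -> is_pseries a (x - x0) (f x).

Definition constant_fun (f : R -> R) : Prop := forall x y, f x = f y.

Definition approx_homogeneous (r q : nat) (f : R -> R) : Prop :=
  exists s, 0 < s /\
    (forall x, 0 <= x -> Rabs (f x - x ^ r) <= s) /\
    (forall x, x <= 0 -> Rabs (f x - x ^ q) <= s).

From Stdlib Require Import Reals List Lia Lra ZArith Classical.
From Coquelicot Require Import Coquelicot.
Open Scope R_scope.

(* If [rho'(z0) <> 0], then [s |-> (rho (eps s + z0) - rho z0) / (eps rho'(z0))] tends to
   the identity uniformly on compacts as [eps -> 0].  Composing such maps in all hidden
   layers but the last shows that every function [x |-> Phi (x_0)], with [Phi] a uniform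
   limit on compacts of two-neuron sums [a0 rho (al0 u + be0) + a1 rho (al1 u + be1) + c],
   is a uniform limit of realizations.  It remains to pick [Phi] that is not realizable:
   - in case (i), the difference quotients of [rho] give [Phi u = rho'(u + z)], which is
     not [C^k] near [0] for a suitable [z], while realizations are [C^k] when [rho] is;
   - in case (ii), they give the line [Phi u = rho'(z0) u], while realizations are
     bounded and analytic, so by the identity theorem cannot agree with it on [(-B, B)];
   - in case (iii), [rho (n u) / n ^ max(r, q)] tends to a one-sided power [u_+ ^ m] or
     [u_- ^ m], whose [(m-1)]-st derivative has a kink at [0], while realizations are [C^m]. *)

(** * Iterated differentiability *)

(* An inductive form of [Ck]: it is closed under sums, products and composition
   without any bookkeeping of [Derive_n]. *)
Fixpoint Ck_rec (k : nat) (f : R -> R) : Prop :=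
  match k with
  | O => forall x, continuous f x
  | S k' => exists f', (forall x, is_derive f x (f' x)) /\ Ck_rec k' f'
  end.

Lemma Ck_rec_continuous k f : Ck_rec k f -> forall x, continuous f x.
Proof.
  destruct k as [|k]; simpl; auto.
  intros [f' [H _]] x. apply (@ex_derive_continuous R_AbsRing R_NormedModule).
  exists (f' x). apply H.
Qed.

Lemma Ck_rec_S k f : Ck_rec (S k) f -> Ck_rec k f.
Proof.
  revert f; induction k as [|k IH]; intros f H.
  - intros x; exact (Ck_rec_continuous 1 f H x).
  - destruct H as [f' [Hd HP]]. exists f'. split; auto.
Qed.

Lemma Ck_rec_le j k f : (j <= k)%nat -> Ck_rec k f -> Ck_rec j f.
Proof. intros H. induction H; auto. intros Hk. apply IHle, Ck_rec_S, Hk. Qed.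

Lemma Ck_rec_ext k f g : (forall x, f x = g x) -> Ck_rec k f -> Ck_rec k g.
Proof.
  destruct k as [|k]; simpl.
  - intros E H x. apply (continuous_ext f); auto.
  - intros E [f' [Hd HP]]. exists f'. split; auto.
    intros x. apply (is_derive_ext f); auto.
Qed.

Lemma Ck_rec_const k c : Ck_rec k (fun _ => c).
Proof.
  revert c; induction k as [|k IH]; intros c; simpl.
  - intros x. apply continuous_const.
  - exists (fun _ => 0). split; [|exact (IH 0)]. intros x. apply (is_derive_const c x).
Qed.

Lemma Ck_rec_id k : Ck_rec k (fun t => t).
Proof.
  destruct k as [|k]; simpl.
  - intros x. apply continuous_id.
  - exists (fun _ => 1). split; [|apply Ck_rec_const]. intros x. apply (is_derive_id x).
Qed.

Lemma Ck_rec_plus k f g : Ck_rec k f -> Ck_rec k g -> Ck_rec k (fun t => f t + g t).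
Proof.
  revert f g; induction k as [|k IH]; simpl; intros f g Hf Hg.
  - intros x. apply (continuous_plus f g); auto.
  - destruct Hf as [f' [Hf Pf]], Hg as [g' [Hg Pg]].
    exists (fun t => f' t + g' t). split; auto.
    intros x. apply (is_derive_plus f g); auto.
Qed.

Lemma Ck_rec_mult k f g : Ck_rec k f -> Ck_rec k g -> Ck_rec k (fun t => f t * g t).
Proof.
  revert f g; induction k as [|k IH]; intros f g Hf Hg.
  - simpl in *. intros x. apply (continuous_mult f g); auto.
  - pose proof (Ck_rec_S _ _ Hf) as Mf. pose proof (Ck_rec_S _ _ Hg) as Mg.
    destruct Hf as [f' [Hf Pf]], Hg as [g' [Hg Pg]].
    exists (fun t => f' t * g t + f t * g' t). split.
    + intros x. apply (is_derive_mult f g); auto. intros; apply Rmult_comm.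
    + apply Ck_rec_plus; apply IH; auto.
Qed.

Lemma Ck_rec_comp k g h : Ck_rec k g -> Ck_rec k h -> Ck_rec k (fun t => g (h t)).
Proof.
  revert g h; induction k as [|k IH]; intros g h Hg Hh.
  - simpl in *. intros x. apply (continuous_comp h g); auto.
  - pose proof (Ck_rec_S _ _ Hh) as Mh.
    destruct Hg as [g' [Hg Pg]], Hh as [h' [Hh Ph]].
    exists (fun t => h' t * g' (h t)). split.
    + intros x. apply (is_derive_comp g h); auto.
    + apply Ck_rec_mult; auto.
Qed.

Lemma Ck_rec_pow k m : Ck_rec k (fun x => x ^ m).
Proof.
  induction m as [|m IH].
  - exact (Ck_rec_const k 1).
  - apply (Ck_rec_mult k (fun x => x) (fun x => x ^ m)); [apply Ck_rec_id | exact IH].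
Qed.

Lemma Derive_n_S_Derive f m x : Derive_n f (S m) x = Derive_n (Derive f) m x.
Proof.
  revert x; induction m as [|m IH]; intros x; [reflexivity|].
  simpl. apply Derive_ext. intros t. apply IH.
Qed.

Lemma ex_derive_n_S_Derive f m x :
  ex_derive_n f (S (S m)) x <-> ex_derive_n (Derive f) (S m) x.
Proof.
  simpl. split; apply ex_derive_ext; intros t.
  - apply (Derive_n_S_Derive f m t).
  - symmetry; apply (Derive_n_S_Derive f m t).
Qed.

Lemma Ck_of_Ck_rec k f : Ck_rec k f -> Ck k f.
Proof.
  revert f; induction k as [|k IH]; intros f H.
  - split.
    + intros m x Hm. destruct m; [exact I | lia].
    + intros x. apply (continuous_ext f); [reflexivity | exact (H x)].
  - destruct H as [f' [Hd HP]].
    assert (E : forall x, Derive f x = f' x) by (intros; apply is_derive_unique; auto).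
    destruct (IH f' HP) as [IH1 IH2]. split.
    + intros m x Hm. destruct m as [|[|m]].
      * exact I.
      * exists (f' x). apply (is_derive_ext f); auto.
      * apply ex_derive_n_S_Derive. apply (ex_derive_n_ext f').
        { intros; symmetry; apply E. }
        apply IH1. lia.
    + intros x. apply (continuous_ext (Derive_n f' k)).
      { intros t. rewrite Derive_n_S_Derive. apply Derive_n_ext. intros; symmetry; apply E. }
      apply IH2.
Qed.

Lemma Ck_rec_of_Ck k f : Ck k f -> Ck_rec k f.
Proof.
  intros [H1 H2].
  assert (G : forall j, (j <= k)%nat -> Ck_rec j (Derive_n f (k - j))).
  { induction j as [|j IH]; intros Hj.
    - simpl. replace (k - 0)%nat with k by lia. apply H2.
    - exists (Derive_n f (k - j)). split.
      + intros x. replace (k - j)%nat with (S (k - S j)) by lia.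
        apply Derive_correct, (H1 (S (k - S j)) x). lia.
      + apply IH. lia. }
  apply (Ck_rec_ext k (Derive_n f (k - k))).
  - intros x. replace (k - k)%nat with 0%nat by lia. reflexivity.
  - apply G. lia.
Qed.

Definition is_C1 (f : R -> R) : Prop :=
  (forall x, ex_derive f x) /\ (forall x, continuous (Derive f) x).

Lemma is_C1_of_Ck_rec f : Ck_rec 1 f -> is_C1 f.
Proof.
  intros [f' [Hd Hc]].
  assert (E : forall x, Derive f x = f' x) by (intros; apply is_derive_unique; auto).
  split.
  - intros x. exists (f' x). auto.
  - intros x. apply (continuous_ext f'); [intros; symmetry; auto|]. apply Hc.
Qed.

Lemma fold_right_Rplus_init (l : list R) a c :
  fold_right Rplus (a + c) l = fold_right Rplus a l + c.
Proof. induction l; simpl; [reflexivity | rewrite IHl; ring]. Qed.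

Lemma rsum_S n f : rsum (S n) f = rsum n f + f n.
Proof.
  unfold rsum. rewrite seq_S, map_app, fold_right_app. simpl.
  replace (f n + 0) with (0 + f n) by ring. apply fold_right_Rplus_init.
Qed.

Lemma rsum_ext n f g : (forall j, (j < n)%nat -> f j = g j) -> rsum n f = rsum n g.
Proof.
  induction n as [|n IH]; intros H; [reflexivity|].
  rewrite !rsum_S, IH by (intros; apply H; lia). rewrite H by lia. reflexivity.
Qed.

Lemma rsum_abs_le n (c v : nat -> R) M : (forall j, Rabs (v j) <= M) ->
  Rabs (rsum n (fun j => c j * v j)) <= rsum n (fun j => Rabs (c j)) * M.
Proof.
  intros H. induction n as [|n IH].
  - unfold rsum; simpl. rewrite Rabs_R0. lra.
  - rewrite !rsum_S. eapply Rle_trans; [apply Rabs_triang|]. rewrite Rabs_mult.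
    assert (Rabs (c n) * Rabs (v n) <= Rabs (c n) * M)
      by (apply Rmult_le_compat_l; [apply Rabs_pos | auto]).
    lra.
Qed.

Lemma rsum_first n w (h : nat -> R) : (1 <= n)%nat ->
  rsum n (fun j => (if Nat.eqb j 0 then w else 0) * h j) = w * h 0%nat.
Proof.
  induction n as [|n IH]; intros Hn; [lia|].
  rewrite rsum_S. destruct n as [|n].
  - unfold rsum; simpl. ring.
  - rewrite IH by lia. simpl. ring.
Qed.

Lemma rsum_first_two n a0 a1 (h : nat -> R) : (1 <= n)%nat -> (a1 = 0 \/ (2 <= n)%nat) ->
  rsum n (fun j => (if Nat.eqb j 0 then a0 else if Nat.eqb j 1 then a1 else 0) * h j)
  = a0 * h 0%nat + a1 * h 1%nat.
Proof.
  intros Hn Ha.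
  assert (G : forall m, (2 <= m)%nat ->
    rsum m (fun j => (if Nat.eqb j 0 then a0 else if Nat.eqb j 1 then a1 else 0) * h j)
    = a0 * h 0%nat + a1 * h 1%nat).
  { induction m as [|m IH]; intros Hm; [lia|].
    rewrite rsum_S. destruct (Nat.eq_dec m 1) as [->|Hm1].
    - unfold rsum; simpl. ring.
    - rewrite IH by lia. destruct m as [|[|m]]; [lia | lia |]. simpl. ring. }
  destruct (Compare_dec.le_lt_dec 2 n) as [H2|H2]; [apply G; auto|].
  destruct Ha as [Ha|Ha]; [|lia]. subst a1. replace n with 1%nat by lia.
  unfold rsum; simpl. ring.
Qed.

(** * Realizations along the first coordinate axis *)

Definition axis_point (t : R) : nat -> R := fun i => if Nat.eqb i 0 then t else 0.

Lemma in_cube_axis_point d B t : Rabs t <= B -> in_cube d B (axis_point t).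
Proof.
  intros Ht i _. pose proof (Rabs_pos t). unfold axis_point.
  destruct (Nat.eqb i 0); [apply Rabs_le_between; auto | lra].
Qed.

Section ClosedClass.

Variable P : (R -> R) -> Prop.
Hypothesis P_ext : forall f g, (forall x, f x = g x) -> P f -> P g.
Hypothesis P_const : forall c, P (fun _ => c).
Hypothesis P_id : P (fun x => x).
Hypothesis P_plus : forall f g, P f -> P g -> P (fun x => f x + g x).
Hypothesis P_scal : forall c f, P f -> P (fun x => c * f x).
Variable rho : R -> R.
Hypothesis P_comp_rho : forall f, P f -> P (fun x => rho (f x)).

Lemma rsum_closed n (F : nat -> R -> R) :
  (forall j, (j < n)%nat -> P (F j)) -> P (fun t => rsum n (fun j => F j t)).
Proof.
  induction n as [|n IH]; intros H.
  - apply (P_ext (fun _ => 0)); [reflexivity | apply P_const].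
  - apply (P_ext (fun t => rsum n (fun j => F j t) + F n t)).
    { intros; symmetry; apply rsum_S. }
    apply P_plus; [apply IH; intros; apply H; lia | apply H; lia].
Qed.

Lemma hidden_out_axis_closed dims A b l i :
  P (fun t => hidden_out rho dims A b l (axis_point t) i).
Proof.
  revert i; induction l as [|l IH]; intros i; simpl.
  - unfold axis_point. destruct (Nat.eqb i 0); [apply P_id | apply P_const].
  - apply P_comp_rho, P_plus; [|apply P_const].
    apply rsum_closed. intros j _. apply P_scal, IH.
Qed.

Lemma realization_axis_closed d Ns A b :
  P (fun t => realization rho d Ns A b (axis_point t)).
Proof.
  unfold realization. apply P_plus; [|apply P_const].
  apply rsum_closed. intros j _. apply P_scal, hidden_out_axis_closed.
Qed.

End ClosedClass.

Lemma realization_axis_Ck_rec k rho d Ns A b : Ck_rec k rho ->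
  Ck_rec k (fun t => realization rho d Ns A b (axis_point t)).
Proof.
  intros Hrho. apply realization_axis_closed.
  - apply Ck_rec_ext.
  - apply Ck_rec_const.
  - apply Ck_rec_id.
  - apply Ck_rec_plus.
  - intros c f. apply Ck_rec_mult, Ck_rec_const.
  - intros f. apply Ck_rec_comp, Hrho.
Qed.

Lemma realization_axis_bounded rho d Ns A b M : Ns <> nil -> (forall x, Rabs (rho x) <= M) ->
  exists Mb, forall t, Rabs (realization rho d Ns A b (axis_point t)) <= Mb.
Proof.
  intros Hne HM. destruct Ns as [|N0 Ns']; [congruence|].
  set (L := S (length (N0 :: Ns'))).
  exists (rsum (arch_dims d (N0 :: Ns') (pred L)) (fun j => Rabs (A L 0%nat j)) * M
          + Rabs (b L 0%nat)).
  intros t. unfold realization. eapply Rle_trans; [apply Rabs_triang|].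
  apply Rplus_le_compat_r, rsum_abs_le. intros j. apply HM.
Qed.

(** * The approximate-identity network *)

Definition near_id_step (rho : R -> R) (eps z0 kk s : R) : R :=
  (rho (eps * s + z0) - rho z0) * kk.

Fixpoint near_id_iter rho eps z0 kk (n : nat) (t : R) : R :=
  match n with
  | O => t
  | S n => near_id_step rho eps z0 kk (near_id_iter rho eps z0 kk n t)
  end.

(* Neuron 0 of hidden layer [l < L1] outputs [rho (eps * U + z0)], [U] the current
   iterate; layer [l + 1] reads it with weight [al * kk] and bias [be - al * kk * rho z0],
   so that its pre-activation is [al * near_id_step U + be].  Neuron 1 is only used in the
   last hidden layer [L1]. *)
Definition layer_weight (l : nat) (kk al : R) : R := if Nat.eqb l 1 then al else al * kk.
Definition layer_bias (rho : R -> R) z0 (l : nat) (kk al be : R) : R :=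
  if Nat.eqb l 1 then be else be - al * kk * rho z0.
Definition neuron0_scale (L1 : nat) (eps al0 : R) (l : nat) : R :=
  if Nat.ltb l L1 then eps else al0.
Definition neuron0_shift (L1 : nat) (z0 be0 : R) (l : nat) : R :=
  if Nat.ltb l L1 then z0 else be0.

Definition gadget_A L1 eps kk al0 al1 a0 a1 (l i j : nat) : R :=
  if Nat.eqb l (S L1) then (if Nat.eqb j 0 then a0 else if Nat.eqb j 1 then a1 else 0)
  else if Nat.eqb j 0 then
    (if Nat.eqb i 0 then layer_weight l kk (neuron0_scale L1 eps al0 l)
     else if Nat.eqb i 1 then layer_weight l kk al1 else 0)
  else 0.

Definition gadget_b rho L1 eps z0 kk al0 be0 al1 be1 c (l i : nat) : R :=
  if Nat.eqb l (S L1) then c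
  else if Nat.eqb i 0 then
    layer_bias rho z0 l kk (neuron0_scale L1 eps al0 l) (neuron0_shift L1 z0 be0 l)
  else if Nat.eqb i 1 then layer_bias rho z0 l kk al1 be1 else 0.

Lemma arch_dims_pos d Ns l : (1 <= d)%nat -> (forall N, In N Ns -> (1 <= N)%nat) ->
  (l <= length Ns)%nat -> (1 <= arch_dims d Ns l)%nat.
Proof.
  intros Hd HN Hl. unfold arch_dims. destruct l as [|l]; simpl; auto.
  apply HN, nth_In. lia.
Qed.

Lemma arch_dims_last d Ns : Ns <> nil -> arch_dims d Ns (length Ns) = last Ns 0%nat.
Proof.
  unfold arch_dims. revert d. induction Ns as [|a Ns IH]; intros d H; [congruence|].
  destruct Ns as [|b Ns'].
  - reflexivity.
  - change (nth (length (b :: Ns')) (a :: b :: Ns') 0%nat = last (b :: Ns') 0%nat).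
    apply IH; congruence.
Qed.

Section Gadget.

Variables (rho : R -> R) (d : nat) (Ns : list nat).
Variables (eps z0 kk al0 be0 al1 be1 a0 a1 c : R).
Hypothesis Hd : (1 <= d)%nat.
Hypothesis HN : forall N, In N Ns -> (1 <= N)%nat.
Hypothesis Hne : Ns <> nil.

Let L1 := length Ns.
Let dims := arch_dims d Ns.
Let A := gadget_A L1 eps kk al0 al1 a0 a1.
Let b := gadget_b rho L1 eps z0 kk al0 be0 al1 be1 c.
Let U := near_id_iter rho eps z0 kk.

Lemma gadget_hidden_out l x : (1 <= l <= L1)%nat ->
  hidden_out rho dims A b l x 0%nat
    = rho (neuron0_scale L1 eps al0 l * U (l - 1) (x 0%nat) + neuron0_shift L1 z0 be0 l)
  /\ hidden_out rho dims A b l x 1%nat = rho (al1 * U (l - 1) (x 0%nat) + be1).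
Proof.
  assert (HL : (1 <= L1)%nat) by (unfold L1; destruct Ns; [congruence | simpl; lia]).
  induction l as [|l IH]; intros Hl; [lia|].
  assert (Hneq : Nat.eqb (S l) (S L1) = false) by (apply Nat.eqb_neq; lia).
  assert (Hdl : (1 <= dims l)%nat) by (apply arch_dims_pos; auto; unfold L1 in *; lia).
  change (hidden_out rho dims A b (S l) x ?i) with
    (rho (rsum (dims l) (fun j => A (S l) i j * hidden_out rho dims A b l x j) + b (S l) i)).
  unfold b, gadget_b. rewrite Hneq. simpl Nat.eqb.
  rewrite (rsum_ext _ _ (fun j => (if Nat.eqb j 0
      then layer_weight (S l) kk (neuron0_scale L1 eps al0 (S l)) else 0)
      * hidden_out rho dims A b l x j))
    by (intros j _; unfold A, gadget_A; rewrite Hneq; reflexivity).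
  rewrite (rsum_ext _ (fun j => A (S l) 1%nat j * _)
      (fun j => (if Nat.eqb j 0 then layer_weight (S l) kk al1 else 0)
      * hidden_out rho dims A b l x j))
    by (intros j _; unfold A, gadget_A; rewrite Hneq; reflexivity).
  rewrite !(rsum_first _ _ _ Hdl).
  destruct l as [|l].
  - split; reflexivity.
  - destruct (IH ltac:(lia)) as [IH0 _]. rewrite IH0.
    assert (Hlt : Nat.ltb (S l) L1 = true) by (apply Nat.ltb_lt; lia).
    replace (S (S l) - 1)%nat with (S l) by lia. replace (S l - 1)%nat with l by lia.
    unfold layer_weight, layer_bias, U, neuron0_scale, neuron0_shift. simpl.
    rewrite Hlt. unfold near_id_step. split; f_equal; ring.
Qed.

Lemma gadget_realization : (a1 = 0 \/ (2 <= last Ns 0)%nat) -> forall x,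
  realization rho d Ns A b x
  = a0 * rho (al0 * U (L1 - 1) (x 0%nat) + be0) + a1 * rho (al1 * U (L1 - 1) (x 0%nat) + be1) + c.
Proof.
  intros Ha x.
  assert (HL : (1 <= L1)%nat) by (unfold L1; destruct Ns; [congruence | simpl; lia]).
  unfold realization. fold L1. fold dims. simpl pred.
  destruct (gadget_hidden_out L1 x ltac:(lia)) as [H0 H1].
  unfold A at 1, gadget_A at 1. rewrite Nat.eqb_refl.
  rewrite rsum_first_two.
  - rewrite H0, H1. unfold b, gadget_b. rewrite Nat.eqb_refl.
    unfold neuron0_scale, neuron0_shift. rewrite Nat.ltb_irrefl. ring.
  - apply arch_dims_pos; auto.
  - unfold dims. rewrite arch_dims_last by auto. auto.
Qed.

End Gadget.

Lemma in_RNN_gadget rho d Ns B eps z0 kk al0 be0 al1 be1 a0 a1 c :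
  (1 <= d)%nat -> (forall N, In N Ns -> (1 <= N)%nat) -> Ns <> nil ->
  (a1 = 0 \/ (2 <= last Ns 0)%nat) ->
  in_RNN rho d Ns B (fun x =>
    a0 * rho (al0 * near_id_iter rho eps z0 kk (length Ns - 1) (x 0%nat) + be0)
    + a1 * rho (al1 * near_id_iter rho eps z0 kk (length Ns - 1) (x 0%nat) + be1) + c).
Proof.
  intros Hd HN Hne Ha.
  exists (gadget_A (length Ns) eps kk al0 al1 a0 a1),
         (gadget_b rho (length Ns) eps z0 kk al0 be0 al1 be1 c).
  intros x _. symmetry. apply gadget_realization; auto.
Qed.

(** * Uniform limits of two-neuron sums *)

Lemma continuous_eps_delta (f : R -> R) (x : R) : continuous f x ->
  forall eps, 0 < eps -> exists delta, 0 < delta /\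
    forall y, Rabs (y - x) < delta -> Rabs (f y - f x) < eps.
Proof.
  intros Hc eps He.
  assert (Hp : continuity_pt f x) by (apply continuity_pt_filterlim; exact Hc).
  destruct (proj1 (continuity_pt_locally f x) Hp (mkposreal eps He)) as [del Hd].
  exists del. split; [apply cond_pos | exact Hd].
Qed.

Lemma uniform_continuity_segment (f : R -> R) a b : (forall x, continuous f x) ->
  forall eps, 0 < eps -> exists delta, 0 < delta /\ forall x y, a <= x <= b -> a <= y <= b ->
    Rabs (x - y) < delta -> Rabs (f x - f y) < eps.
Proof.
  intros Hc eps He.
  assert (U : uniform_continuity f (fun c => a <= c <= b)).
  { apply Heine; [apply compact_P3|]. intros x _. apply continuity_pt_filterlim, Hc. }
  destruct (U (mkposreal eps He)) as [del Hd]. exists del. split; [apply cond_pos|].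
  intros x y Hx Hy Hxy. apply Hd; auto.
Qed.

Lemma locally_eq_on_interval (f g : R -> R) a b t : a < t < b ->
  (forall y, a < y < b -> f y = g y) -> locally t (fun y => f y = g y).
Proof.
  intros Ht H. apply (locally_interval _ t (Finite a) (Finite b)); simpl; try lra.
  intros y Hy1 Hy2. apply H. simpl in *. lra.
Qed.

Lemma MVT_Derive (f : R -> R) : (forall x, ex_derive f x) -> forall a b,
  exists c, Rmin a b <= c <= Rmax a b /\ f b - f a = Derive f c * (b - a).
Proof.
  intros H a b. apply (MVT_gen f a b (Derive f)).
  - intros x _. apply Derive_correct, H.
  - intros x _. apply continuity_pt_filterlim.
    apply (@ex_derive_continuous R_AbsRing R_NormedModule), H.
Qed.

Lemma Rabs_between_le a b c : Rmin a b <= c <= Rmax a b -> Rabs (c - a) <= Rabs (b - a).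
Proof.
  unfold Rmin, Rmax. intros H. destruct (Rle_dec a b);
  unfold Rabs; destruct (Rcase_abs (c - a)); destruct (Rcase_abs (b - a)); lra.
Qed.

Lemma exists_Derive_neq_0 f : (forall x, ex_derive f x) -> ~ constant_fun f ->
  exists z, Derive f z <> 0.
Proof.
  intros Hd Hnc. apply NNPP. intros Hno. apply Hnc. intros x y.
  destruct (MVT_Derive f Hd x y) as [c [_ Hc]].
  assert (Derive f c = 0) by (apply NNPP; intros Hc0; apply Hno; exists c; exact Hc0).
  rewrite H, Rmult_0_l in Hc. lra.
Qed.

Lemma inv_INR_S_eventually_lt e : 0 < e ->
  exists N, forall n, (N <= n)%nat -> / (INR n + 1) < e.
Proof.
  intros He. destruct (archimed (/ e)) as [Ha _].
  assert (Hup : 0 <= IZR (up (/ e))) by (pose proof (Rinv_0_lt_compat _ He); lra).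
  exists (Z.to_nat (up (/ e))). intros n Hn.
  apply le_INR in Hn. rewrite INR_IZR_INZ, Z2Nat.id in Hn by (apply le_IZR; exact Hup).
  rewrite <- (Rinv_inv e). apply Rinv_lt_contravar; [|lra].
  apply Rmult_lt_0_compat; [apply Rinv_0_lt_compat; auto | pose proof (pos_INR n); lra].
Qed.

Definition unif_conv_on (K : R) (fs : nat -> R -> R) (g : R -> R) : Prop :=
  forall eta, 0 < eta -> exists N, forall n, (N <= n)%nat ->
    forall u, Rabs u <= K -> Rabs (fs n u - g u) <= eta.

Lemma unif_conv_on_ext K (fs gs : nat -> R -> R) g :
  (forall n u, Rabs u <= K -> fs n u = gs n u) -> unif_conv_on K fs g -> unif_conv_on K gs g.
Proof.
  intros E H eta Heta. destruct (H eta Heta) as [N HN]. exists N.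
  intros n Hn u Hu. rewrite <- E by exact Hu. apply HN; auto.
Qed.

(* Mean value theorem: the error is [v (rho' c - rho' y)] with [|c - y| <= h |v|]. *)
Lemma difference_quotient_close rho : is_C1 rho -> forall K, 0 <= K -> forall eta, 0 < eta ->
  exists e0, 0 < e0 /\ forall h, 0 < h < e0 -> forall y v, Rabs y <= K -> Rabs v <= K ->
    Rabs ((rho (y + h * v) - rho y) / h - Derive rho y * v) <= eta.
Proof.
  intros [Hd Hc] K HK eta Heta.
  destruct (uniform_continuity_segment (Derive rho) (-(K + 1)) (K + 1) Hc (eta / (K + 1)))
    as [del [Hdel Hud]]; [apply Rdiv_lt_0_compat; lra|].
  pose proof (Rmin_l del 1). pose proof (Rmin_r del 1).
  assert (Hm : 0 < Rmin del 1) by (apply Rmin_glb_lt; lra).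
  exists (Rmin del 1 / (K + 1)). split; [apply Rdiv_lt_0_compat; lra|].
  intros h [Hh0 Hh] y v Hy Hv.
  apply (Rmult_lt_compat_r (K + 1)) in Hh; [|lra].
  unfold Rdiv in Hh. rewrite Rmult_assoc, Rinv_l, Rmult_1_r in Hh by lra.
  assert (HhK : h * Rabs v < Rmin del 1)
    by (apply Rle_lt_trans with (h * (K + 1)); [apply Rmult_le_compat_l|]; lra).
  destruct (MVT_Derive rho Hd y (y + h * v)) as [c [Hc1 Hc2]].
  assert (Hcy : Rabs (c - y) <= h * Rabs v).
  { rewrite <- (Rabs_pos_eq h), <- Rabs_mult by lra.
    replace (h * v) with (y + h * v - y) by ring. apply Rabs_between_le, Hc1. }
  rewrite Hc2.
  replace ((Derive rho c * (y + h * v - y)) / h - Derive rho y * v)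
    with (v * (Derive rho c - Derive rho y)) by (field; lra).
  rewrite Rabs_mult.
  assert (Hdc : Rabs (Derive rho c - Derive rho y) < eta / (K + 1)).
  { apply Hud; try lra; apply Rabs_le_between.
    - replace c with ((c - y) + y) by ring.
      eapply Rle_trans; [apply Rabs_triang|]. lra.
    - lra. }
  apply Rle_trans with (K * (eta / (K + 1))).
  - apply Rmult_le_compat; try apply Rabs_pos; lra.
  - unfold Rdiv. apply Rle_trans with ((K + 1) * (eta * / (K + 1))).
    + apply Rmult_le_compat_r; [apply Rmult_le_pos; [lra | left; apply Rinv_0_lt_compat]|]; lra.
    + right. field. lra.
Qed.

Lemma difference_quotient_unif_conv rho K : is_C1 rho -> 0 <= K ->
  forall eta, 0 < eta -> exists N, forall n, (N <= n)%nat ->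
  forall y v, Rabs y <= K -> Rabs v <= K ->
    Rabs ((rho (y + / (INR n + 1) * v) - rho y) * (INR n + 1) - Derive rho y * v) <= eta.
Proof.
  intros H1 HK eta Heta.
  destruct (difference_quotient_close rho H1 K HK eta Heta) as [e0 [He0 Hq]].
  destruct (inv_INR_S_eventually_lt e0 He0) as [N HN]. exists N. intros n Hn y v Hy Hv.
  pose proof (pos_INR n).
  replace ((rho (y + / (INR n + 1) * v) - rho y) * (INR n + 1))
    with ((rho (y + / (INR n + 1) * v) - rho y) / / (INR n + 1)) by (field; lra).
  apply Hq; auto. split; [apply Rinv_0_lt_compat; lra | apply HN, Hn].
Qed.

Lemma near_id_step_close rho z0 : is_C1 rho -> Derive rho z0 <> 0 ->
  forall K, 0 <= K -> forall eta, 0 < eta -> exists e0, 0 < e0 /\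
    forall eps, 0 < eps < e0 -> forall s, Rabs s <= K ->
      Rabs (near_id_step rho eps z0 (/ (eps * Derive rho z0)) s - s) <= eta.
Proof.
  intros H1 Hd0 K HK eta Heta.
  assert (Hpos : 0 < Rabs (Derive rho z0)) by (apply Rabs_pos_lt; auto).
  destruct (difference_quotient_close rho H1 (Rmax K (Rabs z0)) ltac:(apply Rmax_Rle; auto)
              (eta * Rabs (Derive rho z0)) ltac:(apply Rmult_lt_0_compat; auto))
    as [e0 [He0 Hq]].
  exists e0. split; auto. intros eps Heps s Hs.
  specialize (Hq eps Heps z0 s (Rmax_r _ _) ltac:(apply Rmax_Rle; auto)).
  unfold near_id_step. rewrite (Rplus_comm (eps * s)).
  replace ((rho (z0 + eps * s) - rho z0) * / (eps * Derive rho z0) - s)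
    with (((rho (z0 + eps * s) - rho z0) / eps - Derive rho z0 * s) / Derive rho z0)
    by (field; lra).
  unfold Rdiv at 1. rewrite Rabs_mult, Rabs_inv.
  apply Rmult_le_reg_r with (Rabs (Derive rho z0)); auto.
  rewrite Rmult_assoc, Rinv_l by lra. lra.
Qed.

Lemma near_id_iter_close rho z0 B : is_C1 rho -> Derive rho z0 <> 0 -> 0 <= B ->
  forall J eta, 0 < eta -> exists e0, 0 < e0 /\
    forall eps, 0 < eps < e0 -> forall t, Rabs t <= B ->
      Rabs (near_id_iter rho eps z0 (/ (eps * Derive rho z0)) J t - t) <= eta.
Proof.
  intros H1 H2 HB J. induction J as [|J IH]; intros eta Heta.
  - exists 1. split; [lra|]. intros. simpl. rewrite Rminus_diag, Rabs_R0. lra.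
  - set (e := Rmin eta 1 / 2).
    assert (He : 0 < e) by (unfold e; apply Rdiv_lt_0_compat; [apply Rmin_glb_lt|]; lra).
    assert (He1 : e <= 1 / 2) by (unfold e; pose proof (Rmin_r eta 1); lra).
    assert (He2 : e + e <= eta) by (unfold e; pose proof (Rmin_l eta 1); lra).
    destruct (IH e He) as [e1 [He1p Hi1]].
    destruct (near_id_step_close rho z0 H1 H2 (B + 1) ltac:(lra) e He) as [e2 [He2p Hi2]].
    exists (Rmin e1 e2). split; [apply Rmin_glb_lt; auto|].
    intros eps [Hea Heb] t Ht. simpl.
    pose proof (Rmin_l e1 e2). pose proof (Rmin_r e1 e2).
    specialize (Hi1 eps ltac:(lra) t Ht).
    set (u := near_id_iter rho eps z0 (/ (eps * Derive rho z0)) J t) in *.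
    assert (Hu : Rabs u <= B + 1).
    { replace u with ((u - t) + t) by ring. eapply Rle_trans; [apply Rabs_triang|]. lra. }
    specialize (Hi2 eps ltac:(lra) u Hu).
    replace (near_id_step rho eps z0 (/ (eps * Derive rho z0)) u - t) with
      ((near_id_step rho eps z0 (/ (eps * Derive rho z0)) u - u) + (u - t)) by ring.
    eapply Rle_trans; [apply Rabs_triang|]. lra.
Qed.

Lemma unif_conv_on_comp (Phi : R -> R) (Un Psi : nat -> R -> R) B : 0 < B ->
  (forall x, continuous Phi x) ->
  unif_conv_on B Un (fun t => t) -> unif_conv_on (B + 1) Psi Phi ->
  unif_conv_on B (fun n t => Psi n (Un n t)) Phi.
Proof.
  intros HB Hc HU HP eps He.
  destruct (uniform_continuity_segment Phi (-(B + 1)) (B + 1) Hc (eps / 2) ltac:(lra))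
    as [del [Hdel Hd]].
  destruct (HU (Rmin (del / 2) 1) ltac:(apply Rmin_glb_lt; lra)) as [N1 H1].
  destruct (HP (eps / 2) ltac:(lra)) as [N2 H2].
  exists (max N1 N2). intros n Hn t Ht.
  specialize (H1 n ltac:(lia) t Ht).
  pose proof (Rmin_l (del / 2) 1). pose proof (Rmin_r (del / 2) 1).
  assert (Hu : Rabs (Un n t) <= B + 1).
  { replace (Un n t) with ((Un n t - t) + t) by ring.
    eapply Rle_trans; [apply Rabs_triang|]. lra. }
  specialize (H2 n ltac:(lia) _ Hu).
  assert (Hb : Rabs (Phi (Un n t) - Phi t) < eps / 2).
  { apply Hd; [apply Rabs_le_between; lra | apply Rabs_le_between; lra | lra]. }
  replace (Psi n (Un n t) - Phi t)
    with ((Psi n (Un n t) - Phi (Un n t)) + (Phi (Un n t) - Phi t)) by ring.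
  eapply Rle_trans; [apply Rabs_triang|]. lra.
Qed.

(* The hidden layers before the last one act as [near_id_iter] with [eps = 1/(n+1)],
   which tends to the identity uniformly on [[-B, B]]. *)
Lemma not_closed_of_two_neuron_limit rho d Ns B (Phi : R -> R)
    (al0 be0 al1 be1 a0 a1 c : nat -> R) :
  (1 <= d)%nat -> Ns <> nil -> (forall N, In N Ns -> (1 <= N)%nat) -> 0 < B ->
  is_C1 rho -> ~ constant_fun rho ->
  (forall n, a1 n = 0 \/ (2 <= last Ns 0)%nat) ->
  (forall x, continuous Phi x) ->
  unif_conv_on (B + 1)
    (fun n u => a0 n * rho (al0 n * u + be0 n) + a1 n * rho (al1 n * u + be1 n) + c n) Phi ->
  ~ in_RNN rho d Ns B (fun x => Phi (x 0%nat)) ->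
  RNN_not_closed rho d Ns B.
Proof.
  intros Hd Hne HN HB H1 Hnc Ha1 Hc HP Hnot.
  destruct (exists_Derive_neq_0 rho (proj1 H1) Hnc) as [z0 Hz0].
  set (epsn := fun n : nat => / (INR n + 1)).
  set (Un := fun n t =>
    near_id_iter rho (epsn n) z0 (/ (epsn n * Derive rho z0)) (length Ns - 1) t).
  set (Psi := fun n u => a0 n * rho (al0 n * u + be0 n) + a1 n * rho (al1 n * u + be1 n) + c n).
  exists (fun n x => Psi n (Un n (x 0%nat))), (fun x => Phi (x 0%nat)).
  split; [|split; [|split]]; auto.
  - intros n. apply in_RNN_gadget; auto.
  - intros x Hx eps He.
    destruct (continuous_eps_delta _ _ (Hc (x 0%nat)) eps He) as [del [Hdel Hd']].
    exists del. split; [exact Hdel|]. intros y Hy Hyx. apply Hd', Hyx. lia.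
  - assert (HU : unif_conv_on B Un (fun t => t)).
    { intros eta Heta.
      destruct (near_id_iter_close rho z0 B H1 Hz0 ltac:(lra) (length Ns - 1) eta Heta)
        as [e0 [He0 Hu]].
      destruct (inv_INR_S_eventually_lt e0 He0) as [N HN']. exists N. intros n Hn t Ht.
      apply Hu; auto. split; [|apply HN'; auto].
      unfold epsn. apply Rinv_0_lt_compat. pose proof (pos_INR n); lra. }
    intros eps He.
    destruct (unif_conv_on_comp Phi Un Psi B HB Hc HU HP eps He) as [N HNc].
    exists N. intros n Hn x Hx. apply HNc; auto. apply Rabs_le, Hx. lia.
Qed.

(** * Absolutely convergent double series *)

Lemma sum_f_R0_diff_abs_le (a p : nat -> R) N M : (N <= M)%nat ->
  (forall n, Rabs (a n) <= p n) ->
  Rabs (sum_f_R0 a M - sum_f_R0 a N) <= sum_f_R0 p M - sum_f_R0 p N.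
Proof.
  intros HNM H. induction HNM as [|M HNM IH].
  - rewrite !Rminus_diag, Rabs_R0. lra.
  - simpl. replace (sum_f_R0 a M + a (S M) - sum_f_R0 a N)
      with ((sum_f_R0 a M - sum_f_R0 a N) + a (S M)) by ring.
    eapply Rle_trans; [apply Rabs_triang|]. specialize (H (S M)). lra.
Qed.

Lemma is_series_tail_abs_le (a p : nat -> R) la lp : is_series a la -> is_series p lp ->
  (forall n, Rabs (a n) <= p n) -> forall N, Rabs (la - sum_f_R0 a N) <= lp - sum_f_R0 p N.
Proof.
  intros Ha Hp H N.
  apply is_series_Reals in Ha. apply is_series_Reals in Hp.
  apply Rnot_lt_le. intros G.
  set (D := Rabs (la - sum_f_R0 a N) - (lp - sum_f_R0 p N)).
  assert (HD : 0 < D / 2) by (unfold D; lra).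
  destruct (Ha _ HD) as [N1 H1], (Hp _ HD) as [N2 H2].
  set (M := max N (max N1 N2)).
  specialize (H1 M ltac:(unfold M; lia)). specialize (H2 M ltac:(unfold M; lia)).
  unfold R_dist in *.
  pose proof (sum_f_R0_diff_abs_le a p N M ltac:(unfold M; lia) H).
  assert (Rabs (la - sum_f_R0 a N)
          <= Rabs (sum_f_R0 a M - la) + Rabs (sum_f_R0 a M - sum_f_R0 a N)).
  { replace (la - sum_f_R0 a N)
      with (-(sum_f_R0 a M - la) + (sum_f_R0 a M - sum_f_R0 a N)) by ring.
    eapply Rle_trans; [apply Rabs_triang|]. rewrite Rabs_Ropp. lra. }
  pose proof (Rle_abs (sum_f_R0 p M - lp)). unfold D in *. lra.
Qed.

Lemma is_series_partial_le p l : (forall n, 0 <= p n) -> is_series p l ->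
  forall N, sum_f_R0 p N <= l.
Proof.
  intros Hp Hs N.
  pose proof (is_series_tail_abs_le p p l l Hs Hs) as T.
  assert (Hpp : forall n, Rabs (p n) <= p n) by (intros; rewrite Rabs_pos_eq; auto; lra).
  specialize (T Hpp N). pose proof (Rabs_pos (l - sum_f_R0 p N)). lra.
Qed.

Lemma Series_ge_term p n : (forall n, 0 <= p n) -> ex_series p -> p n <= Series p.
Proof.
  intros Hp He.
  pose proof (is_series_partial_le p (Series p) Hp (Series_correct _ He) n).
  destruct n as [|n]; simpl in *; [lra|].
  pose proof (cond_pos_sum p n Hp). lra.
Qed.

Lemma Series_nonneg p : (forall n, 0 <= p n) -> ex_series p -> 0 <= Series p.
Proof. intros Hp He. apply Rle_trans with (p 0%nat); [apply Hp | apply Series_ge_term; auto]. Qed.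

Lemma is_series_sum_f_R0 (w : nat -> nat -> R) (V : nat -> R) :
  (forall n, is_series (fun k => w k n) (V n)) ->
  forall N, is_series (fun k => sum_f_R0 (fun n => w k n) N) (sum_f_R0 V N).
Proof.
  intros H N. induction N as [|N IH]; simpl; auto.
  apply (is_series_plus (fun k => sum_f_R0 (fun n => w k n) N) (fun k => w k (S N))); auto.
Qed.

Lemma eventually_forall_le (P : nat -> nat -> Prop) :
  (forall k, exists N, forall n, (N <= n)%nat -> P k n) ->
  forall K, exists N, forall k n, (k <= K)%nat -> (N <= n)%nat -> P k n.
Proof.
  intros H K. induction K as [|K IH].
  - destruct (H 0%nat) as [N HN]. exists N. intros k n Hk Hn. replace k with 0%nat by lia. auto.
  - destruct IH as [N1 H1], (H (S K)) as [N2 H2]. exists (max N1 N2).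
    intros k n Hk Hn. destruct (Nat.eq_dec k (S K)) as [->|Hne]; [apply H2 | apply H1]; lia.
Qed.

Lemma sum_f_R0_le_const (Q : nat -> R) c K : (forall k, (k <= K)%nat -> Q k <= c) ->
  sum_f_R0 Q K <= INR (S K) * c.
Proof.
  induction K as [|K IH]; intros H.
  - simpl. specialize (H 0%nat (le_n 0)). lra.
  - rewrite S_INR. simpl sum_f_R0.
    assert (sum_f_R0 Q K <= INR (S K) * c) by (apply IH; intros; apply H; lia).
    specialize (H (S K) (le_n _)). lra.
Qed.

Lemma is_series_abs_le_head_tail (r T : nat -> R) lr lT K e :
  is_series r lr -> is_series T lT -> (forall k, Rabs (r k) <= T k) ->
  (forall k, (k <= K)%nat -> Rabs (r k) <= e) ->
  Rabs lr <= INR (S K) * e + (lT - sum_f_R0 T K).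
Proof.
  intros Hr HT HrT He.
  pose proof (is_series_tail_abs_le r T lr lT Hr HT HrT K) as Htail.
  assert (Hhead : Rabs (sum_f_R0 r K) <= INR (S K) * e).
  { eapply Rle_trans; [apply sum_f_R0_triangle|].
    apply sum_f_R0_le_const. intros k Hk. apply He, Hk. }
  replace lr with ((lr - sum_f_R0 r K) + sum_f_R0 r K) by ring.
  eapply Rle_trans; [apply Rabs_triang|]. lra.
Qed.

Section DoubleSeries.

Variable w : nat -> nat -> R.
Hypothesis Hrow : forall k, ex_series (fun n => Rabs (w k n)).
Hypothesis Htot : ex_series (fun k => Series (fun n => Rabs (w k n))).

Let T := fun k => Series (fun n => Rabs (w k n)).
Let Sr := fun k => Series (fun n => w k n).
Let V := fun n => Series (fun k => w k n).

Lemma double_abs_le_row_sum k n : Rabs (w k n) <= T k.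
Proof. apply (Series_ge_term (fun n => Rabs (w k n))); auto. intros; apply Rabs_pos. Qed.

Lemma double_col_is_series n : is_series (fun k => w k n) (V n).
Proof.
  apply Series_correct, ex_series_Rabs.
  apply (@ex_series_le R_AbsRing R_CompleteNormedModule _ T); auto.
  intros k. unfold norm; simpl. unfold abs; simpl. rewrite Rabs_Rabsolu.
  apply double_abs_le_row_sum.
Qed.

Lemma double_row_is_series k : is_series (fun n => w k n) (Sr k).
Proof. apply Series_correct, ex_series_Rabs, Hrow. Qed.

Lemma double_row_sums_is_series : is_series Sr (Series Sr).
Proof.
  apply Series_correct, (@ex_series_le R_AbsRing R_CompleteNormedModule _ T); auto.
  intros k. apply Series_Rabs, Hrow.
Qed.

(* Split the rows at [K]: the first [K + 1] rows have tails at most [e] beyond [N],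
   the remaining ones contribute at most the tail of [T]. *)
Lemma double_partial_sum_close N K e :
  (forall k, (k <= K)%nat -> T k - sum_f_R0 (fun n => Rabs (w k n)) N <= e) ->
  Rabs (Series Sr - sum_f_R0 V N) <= INR (S K) * e + (Series T - sum_f_R0 T K).
Proof.
  intros He.
  set (r := fun k => Sr k - sum_f_R0 (fun n => w k n) N).
  assert (Hr : is_series r (Series Sr - sum_f_R0 V N)).
  { apply (is_series_minus Sr); [apply double_row_sums_is_series |].
    apply is_series_sum_f_R0, double_col_is_series. }
  assert (HrQ : forall k, Rabs (r k) <= T k - sum_f_R0 (fun n => Rabs (w k n)) N).
  { intros k. apply is_series_tail_abs_le;
      [apply double_row_is_series | apply Series_correct; auto |].
    intros; apply Rle_refl. }
  apply (is_series_abs_le_head_tail r T); auto.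
  - apply Series_correct, Htot.
  - intros k. pose proof (cond_pos_sum (fun n => Rabs (w k n)) N (fun n => Rabs_pos _)).
    specialize (HrQ k). lra.
  - intros k Hk. eapply Rle_trans; [apply HrQ | apply He, Hk].
Qed.

Lemma Series_interchange : is_series V (Series Sr).
Proof.
  apply is_series_Reals. intros eps He.
  assert (HT : is_series T (Series T)) by (apply Series_correct, Htot).
  destruct (proj1 (is_series_Reals _ _) HT (eps / 2) ltac:(lra)) as [K HK].
  specialize (HK K (le_n K)). unfold R_dist in HK. rewrite Rabs_minus_sym in HK.
  set (e := eps / 2 / INR (S K)).
  assert (He2 : 0 < e) by (unfold e; apply Rdiv_lt_0_compat; [lra | apply lt_0_INR; lia]).
  assert (Hrows : forall k, exists N, forall n, (N <= n)%nat ->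
      T k - sum_f_R0 (fun n => Rabs (w k n)) n <= e).
  { intros k. assert (Hk : is_series (fun n => Rabs (w k n)) (T k)) by (apply Series_correct; auto).
    destruct (proj1 (is_series_Reals _ _) Hk e He2) as [N HN].
    exists N. intros n Hn. specialize (HN n Hn). unfold R_dist in HN.
    rewrite Rabs_minus_sym in HN.
    pose proof (Rle_abs (T k - sum_f_R0 (fun n => Rabs (w k n)) n)). lra. }
  destruct (eventually_forall_le _ Hrows K) as [N HN].
  exists N. intros N' HN'. unfold R_dist. rewrite Rabs_minus_sym.
  pose proof (double_partial_sum_close N' K e (fun k Hk => HN k N' Hk HN')) as Hb.
  assert (HKe : INR (S K) * e = eps / 2) by (unfold e; field; apply not_0_INR; lia).
  pose proof (Rle_abs (Series T - sum_f_R0 T K)). lra.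
Qed.

End DoubleSeries.

(** * Power series and analytic functions *)

Definition is_pseries_near (f : R -> R) (x0 : R) (a : nat -> R) (r : R) : Prop :=
  0 < r /\ forall x, Rabs (x - x0) < r -> is_pseries a (x - x0) (f x).

Definition const_seq (c : R) : nat -> R := fun n => if Nat.eqb n 0 then c else 0.

Lemma is_pseries_affine (a : nat -> R) (x : R) : (forall n, (2 <= n)%nat -> a n = 0) ->
  is_pseries a x (a 0%nat + a 1%nat * x).
Proof.
  intros H. apply is_pseries_R, is_series_Reals. intros eps He. exists 1%nat. intros n Hn.
  assert (E : forall m, sum_f_R0 (fun k => a k * x ^ k) (S m) = a 0%nat + a 1%nat * x).
  { induction m as [|m IH]; simpl in *; [ring|].
    rewrite IH, (H (S (S m))) by lia. ring. }
  destruct n as [|n]; [lia|]. rewrite E. unfold R_dist. rewrite Rminus_diag, Rabs_R0. lra.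
Qed.

Lemma is_pseries_const_seq c x : is_pseries (const_seq c) x c.
Proof.
  replace c with (const_seq c 0 + const_seq c 1 * x) at 2 by (unfold const_seq; simpl; ring).
  apply is_pseries_affine. intros n Hn. unfold const_seq. destruct n; [lia | reflexivity].
Qed.

Lemma Rbar_lt_of_le_lt (r : R) (Rb : Rbar) (x : R) :
  Rbar_le r Rb -> Rabs x < r -> Rbar_lt (Rabs x) Rb.
Proof. intros H1 H2. destruct Rb; simpl in *; try tauto; lra. Qed.

Lemma sum_f_R0_ge_term p n N : (forall k, 0 <= p k) -> (n <= N)%nat -> p n <= sum_f_R0 p N.
Proof.
  intros Hp H. induction H.
  - destruct n; simpl; [lra|]. pose proof (cond_pos_sum p n Hp). lra.
  - simpl. specialize (Hp (S m)). lra.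
Qed.

Lemma CV_radius_ge_of_ex_pseries a x : ex_pseries a x -> Rbar_le (Rabs x) (CV_radius a).
Proof.
  intros H. apply ex_pseries_R, ex_series_lim_0, is_lim_seq_Reals in H.
  destruct (H 1 ltac:(lra)) as [N HN].
  apply (proj1 (CV_radius_bounded a)).
  exists (sum_f_R0 (fun n => Rabs (a n * x ^ n)) N + 1). intros n.
  rewrite Rabs_mult, RPow_abs, Rabs_Rabsolu, <- Rabs_mult.
  pose proof (cond_pos_sum (fun n => Rabs (a n * x ^ n)) N (fun k => Rabs_pos _)).
  destruct (Compare_dec.le_lt_dec n N) as [Hn|Hn].
  - pose proof (sum_f_R0_ge_term (fun n => Rabs (a n * x ^ n)) n N (fun k => Rabs_pos _) Hn).
    simpl in *. lra.
  - specialize (HN n ltac:(lia)). unfold R_dist in HN. rewrite Rminus_0_r in HN. lra.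
Qed.

Lemma CV_radius_ge_of_ex_pseries_on a r : 0 < r -> (forall v, 0 <= v < r -> ex_pseries a v) ->
  Rbar_le r (CV_radius a).
Proof.
  intros Hr H. pose proof (CV_radius_ge_0 a) as H0.
  destruct (CV_radius a) as [R| |] eqn:E; simpl in *; auto.
  apply Rnot_lt_le. intros G.
  pose proof (CV_radius_ge_of_ex_pseries a _ (H ((R + r) / 2) ltac:(lra))) as Hc.
  rewrite E in Hc. simpl in Hc. rewrite Rabs_pos_eq in Hc by lra. lra.
Qed.

Lemma CV_radius_ge_of_dominated p q r : 0 < r -> (forall n, Rabs (p n) <= q n) ->
  (forall v, 0 <= v < r -> ex_pseries q v) -> Rbar_le r (CV_radius p).
Proof.
  intros Hr Hpq Hq. apply CV_radius_ge_of_ex_pseries_on; auto. intros v Hv.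
  apply ex_pseries_R. destruct (Hq v Hv) as [l Hl]. apply is_pseries_R in Hl.
  apply (@ex_series_le R_AbsRing R_CompleteNormedModule _ (fun n => q n * v ^ n));
    [|eexists; eauto].
  intros n. unfold norm; simpl. unfold abs; simpl.
  rewrite Rabs_mult, <- RPow_abs, (Rabs_pos_eq v) by lra.
  apply Rmult_le_compat_r; [apply pow_le; lra | auto].
Qed.

Lemma is_pseries_near_CV_radius f x0 a r : is_pseries_near f x0 a r -> Rbar_le r (CV_radius a).
Proof.
  intros [Hr H]. apply CV_radius_ge_of_ex_pseries_on; auto. intros v Hv.
  specialize (H (x0 + v) ltac:(replace (x0 + v - x0) with v by ring; rewrite Rabs_pos_eq; lra)).
  replace (x0 + v - x0) with v in H by ring. eexists; eauto.
Qed.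

Lemma CV_radius_Rabs (a : nat -> R) : CV_radius (fun n => Rabs (a n)) = CV_radius a.
Proof.
  unfold CV_radius. apply Lub_Rbar_eqset. intros r. unfold CV_disk.
  split; apply ex_series_ext; intros n; rewrite !Rabs_mult, Rabs_Rabsolu; reflexivity.
Qed.

Lemma PS_mult_abs_le (a b a' b' : nat -> R) n :
  (forall k, Rabs (a k) <= a' k) -> (forall k, Rabs (b k) <= b' k) ->
  Rabs (PS_mult a b n) <= PS_mult a' b' n.
Proof.
  intros Ha Hb. unfold PS_mult. eapply Rle_trans; [apply sum_f_R0_triangle|].
  apply sum_Rle. intros k _. rewrite Rabs_mult.
  apply Rmult_le_compat; try apply Rabs_pos; auto.
Qed.

Lemma PS_mult_nonneg (a b : nat -> R) n : (forall k, 0 <= a k) -> (forall k, 0 <= b k) ->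
  0 <= PS_mult a b n.
Proof. intros Ha Hb. apply cond_pos_sum. intros k. apply Rmult_le_pos; auto. Qed.

Lemma analytic_ext f g : (forall x, f x = g x) -> analytic f -> analytic g.
Proof.
  intros E Hf x0. destruct (Hf x0) as [a [ra [Hra Ha]]]. exists a, ra. split; auto.
  intros x Hx. rewrite <- E. auto.
Qed.

Lemma analytic_const c : analytic (fun _ => c).
Proof. intros x0. exists (const_seq c), 1. split; [lra|]. intros. apply is_pseries_const_seq. Qed.

Lemma analytic_id : analytic (fun x => x).
Proof.
  intros x0. exists (fun n => if Nat.eqb n 0 then x0 else if Nat.eqb n 1 then 1 else 0), 1.
  split; [lra|]. intros x _.
  replace x with (x0 + 1 * (x - x0)) at 2 by ring. apply is_pseries_affine.
  intros n Hn. destruct n as [|[|n]]; [lia | lia | reflexivity].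
Qed.

Lemma analytic_plus f g : analytic f -> analytic g -> analytic (fun x => f x + g x).
Proof.
  intros Hf Hg x0. destruct (Hf x0) as [a [ra [Hra Ha]]], (Hg x0) as [b [rb [Hrb Hb]]].
  exists (PS_plus a b), (Rmin ra rb). split; [apply Rmin_glb_lt; auto|].
  intros x Hx. pose proof (Rmin_l ra rb). pose proof (Rmin_r ra rb).
  apply (@is_pseries_plus R_AbsRing R_NormedModule); [apply Ha | apply Hb]; lra.
Qed.

Lemma analytic_scal c f : analytic f -> analytic (fun x => c * f x).
Proof.
  intros Hf x0. destruct (Hf x0) as [a [ra [Hra Ha]]].
  exists (PS_scal c a), ra. split; auto. intros x Hx.
  apply (@is_pseries_scal R_AbsRing R_NormedModule); [apply Rmult_comm | auto].
Qed.

Section Composition.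

Variables (f g : R -> R) (x0 : R) (a b : nat -> R) (rf rg : R).
Hypothesis Hf : is_pseries_near f (g x0) a rf.
Hypothesis Hg : is_pseries_near g x0 b rg.

(* [c] expands [g - g x0], [c_abs] is its majorant series and [beta] the sum of the
   majorant; [pw k] and [pwa k] are the coefficients of the [k]-th powers. *)
Let y0 := g x0.
Let c := fun n => b n - const_seq y0 n.
Let c_abs := fun n => Rabs (c n).
Let beta := PSeries c_abs.
Let pw k := Nat.iter k (PS_mult c) (const_seq 1).
Let pwa k := Nat.iter k (PS_mult c_abs) (const_seq 1).

Lemma comp_center_rep x : Rabs (x - x0) < rg -> is_pseries c (x - x0) (g x - y0).
Proof.
  intros Hx. apply (is_pseries_minus b (const_seq y0)); [apply Hg, Hx | apply is_pseries_const_seq].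
Qed.

Lemma comp_CV_radius_c_abs : Rbar_le rg (CV_radius c_abs).
Proof.
  unfold c_abs. rewrite CV_radius_Rabs.
  apply (is_pseries_near_CV_radius (fun x => g x - y0) x0). split; [apply Hg|].
  apply comp_center_rep.
Qed.

Lemma comp_CV_radius_c : Rbar_le rg (CV_radius c).
Proof. rewrite <- CV_radius_Rabs. exact comp_CV_radius_c_abs. Qed.

Lemma comp_beta_rep v : Rabs v < rg -> is_pseries c_abs v (beta v).
Proof.
  intros Hv. apply PSeries_correct, CV_radius_inside.
  apply (Rbar_lt_of_le_lt rg); auto. apply comp_CV_radius_c_abs.
Qed.

Lemma comp_beta_0 : beta 0 = 0.
Proof.
  assert (Hb0 : b 0%nat = y0).
  { pose proof (proj2 Hg x0 ltac:(rewrite Rminus_diag, Rabs_R0; apply Hg)) as H.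
    rewrite Rminus_diag in H. apply is_pseries_unique in H. rewrite PSeries_0 in H. exact H. }
  unfold beta. rewrite PSeries_0. unfold c_abs, c, const_seq. simpl.
  rewrite Hb0, Rminus_diag. apply Rabs_R0.
Qed.

Lemma comp_pw_abs_le k n : Rabs (pw k n) <= pwa k n.
Proof.
  revert n. induction k as [|k IH]; intros n.
  - unfold pw, pwa, const_seq. simpl. destruct (Nat.eqb n 0); rewrite ?Rabs_R1, ?Rabs_R0; lra.
  - apply PS_mult_abs_le; [intros; apply Rle_refl | apply IH].
Qed.

Lemma comp_pwa_rep k v : 0 <= v < rg -> is_pseries (pwa k) v (beta v ^ k).
Proof.
  revert v. induction k as [|k IH]; intros v Hv.
  - apply is_pseries_const_seq.
  - assert (Hrad : Rbar_le rg (CV_radius (pwa k))).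
    { apply CV_radius_ge_of_ex_pseries_on; [lra|]. intros u Hu. eexists. apply IH, Hu. }
    apply is_pseries_mult; [apply comp_beta_rep | apply IH | |]; auto;
      try (rewrite Rabs_pos_eq; lra).
    + apply (Rbar_lt_of_le_lt rg); [apply comp_CV_radius_c_abs | rewrite Rabs_pos_eq; lra].
    + apply (Rbar_lt_of_le_lt rg); [exact Hrad | rewrite Rabs_pos_eq; lra].
Qed.

Lemma comp_pw_rep k x : Rabs (x - x0) < rg -> is_pseries (pw k) (x - x0) ((g x - y0) ^ k).
Proof.
  intros Hx. assert (Hrg : 0 < rg) by apply Hg. induction k as [|k IH].
  - apply is_pseries_const_seq.
  - assert (Hrad : Rbar_le rg (CV_radius (pw k))).
    { apply (CV_radius_ge_of_dominated _ (pwa k)); auto.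
      - apply comp_pw_abs_le.
      - intros v Hv. eexists. apply comp_pwa_rep, Hv. }
    apply is_pseries_mult; [apply comp_center_rep, Hx | exact IH | |];
      apply (Rbar_lt_of_le_lt rg); auto. apply comp_CV_radius_c.
Qed.

Lemma comp_center_abs_le x : Rabs (x - x0) < rg -> Rabs (g x - y0) <= beta (Rabs (x - x0)).
Proof.
  intros Hx.
  assert (Hs := comp_center_rep x Hx). apply is_pseries_R in Hs.
  assert (Hsa := comp_beta_rep (Rabs (x - x0)) ltac:(rewrite Rabs_Rabsolu; exact Hx)).
  apply is_pseries_R in Hsa.
  rewrite <- (is_series_unique _ _ Hs), <- (is_series_unique _ _ Hsa).
  assert (E : forall n, c_abs n * Rabs (x - x0) ^ n = Rabs (c n * (x - x0) ^ n))
    by (intros n; unfold c_abs; rewrite Rabs_mult, RPow_abs; reflexivity).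
  rewrite (Series_ext _ _ E). apply Series_Rabs.
  apply (ex_series_ext _ _ E). eexists; eauto.
Qed.

(* Substitute the expansion of [g - y0] into that of [f] around [y0] and reorder the
   resulting double series; absolute convergence comes from the majorant [beta]. *)
Lemma comp_double_series x : Rabs (x - x0) < rg -> beta (Rabs (x - x0)) < rf ->
  is_series (fun n => Series (fun k => a k * (pw k n * (x - x0) ^ n))) (f (g x)).
Proof.
  intros Hxg Hbv.
  set (u := x - x0) in *. set (v := Rabs u) in *.
  assert (HG : Rabs (g x - y0) <= beta v) by (apply comp_center_abs_le; auto).
  assert (Hbeta0 : 0 <= beta v) by (eapply Rle_trans; [apply Rabs_pos | exact HG]).
  set (w := fun k n => a k * (pw k n * u ^ n)).
  set (m := fun k n => Rabs (a k) * (pwa k n * v ^ n)).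
  assert (Hrow : forall k, is_series (fun n => w k n) (a k * (g x - y0) ^ k)).
  { intros k. apply (@is_series_scal_l R_AbsRing R_NormedModule (a k)), is_pseries_R.
    apply comp_pw_rep. auto. }
  assert (Hwm : forall k n, Rabs (w k n) <= m k n).
  { intros k n. unfold w, m. rewrite !Rabs_mult.
    apply Rmult_le_compat_l; [apply Rabs_pos|]. unfold v. rewrite RPow_abs.
    apply Rmult_le_compat_r; [apply Rabs_pos | apply comp_pw_abs_le]. }
  assert (Hm : forall k, is_series (m k) (Rabs (a k) * beta v ^ k)).
  { intros k. apply (@is_series_scal_l R_AbsRing R_NormedModule (Rabs (a k))), is_pseries_R.
    apply comp_pwa_rep. split; [apply Rabs_pos | auto]. }
  assert (Hwrow : forall k, ex_series (fun n => Rabs (w k n))).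
  { intros k. apply (@ex_series_le R_AbsRing R_CompleteNormedModule _ (m k));
      [|eexists; apply Hm].
    intros n. unfold norm; simpl. unfold abs; simpl. rewrite Rabs_Rabsolu. apply Hwm. }
  assert (Hgeo : ex_series (fun k => Rabs (a k) * beta v ^ k)).
  { apply (ex_series_ext (fun k => Rabs (a k * beta v ^ k))).
    { intros k. rewrite Rabs_mult, <- RPow_abs, (Rabs_pos_eq (beta v)) by auto. reflexivity. }
    apply CV_disk_inside, (Rbar_lt_of_le_lt rf).
    - apply (is_pseries_near_CV_radius f y0), Hf.
    - rewrite Rabs_pos_eq; auto. }
  assert (Htot : ex_series (fun k => Series (fun n => Rabs (w k n)))).
  { apply (@ex_series_le R_AbsRing R_CompleteNormedModule _ (fun k => Rabs (a k) * beta v ^ k));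
      [|exact Hgeo].
    intros k. unfold norm; simpl. unfold abs; simpl.
    rewrite Rabs_pos_eq by (apply Series_nonneg; auto; intros; apply Rabs_pos).
    rewrite <- (is_series_unique _ _ (Hm k)).
    apply Series_le; [|eexists; apply Hm]. intros n. split; [apply Rabs_pos | apply Hwm]. }
  pose proof (Series_interchange w Hwrow Htot) as HF.
  rewrite (Series_ext _ (fun k => a k * (g x - y0) ^ k)) in HF
    by (intros k; apply is_series_unique, Hrow).
  assert (Hfg : is_pseries a (g x - y0) (f (g x))) by (apply Hf; unfold y0 in *; lra).
  apply is_pseries_R, is_series_unique in Hfg. rewrite Hfg in HF. exact HF.
Qed.

Lemma is_pseries_near_comp : exists e d, is_pseries_near (fun x => f (g x)) x0 e d.
Proof.
  assert (Hrf : 0 < rf) by apply Hf.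
  assert (Hrg : 0 < rg) by apply Hg.
  assert (Cbeta : continuous beta 0).
  { apply continuity_pt_filterlim, PSeries_continuity, (Rbar_lt_of_le_lt rg);
      [apply comp_CV_radius_c_abs | rewrite Rabs_R0; auto]. }
  destruct (continuous_eps_delta beta 0 Cbeta rf Hrf) as [d1 [Hd1 Hbeta_near]].
  exists (fun n => Series (fun k => a k * pw k n)), (Rmin d1 rg).
  split; [apply Rmin_glb_lt; auto|].
  intros x Hx. pose proof (Rmin_l d1 rg). pose proof (Rmin_r d1 rg).
  assert (Hbv : beta (Rabs (x - x0)) < rf).
  { specialize (Hbeta_near (Rabs (x - x0)) ltac:(rewrite Rminus_0_r, Rabs_Rabsolu; lra)).
    rewrite comp_beta_0, Rminus_0_r in Hbeta_near. pose proof (Rle_abs (beta (Rabs (x - x0)))).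
    lra. }
  apply is_pseries_R.
  apply (is_series_ext (fun n => Series (fun k => a k * (pw k n * (x - x0) ^ n))));
    [|apply comp_double_series; auto; lra].
  intros n. rewrite <- Series_scal_r. apply Series_ext. intros k. ring.
Qed.

End Composition.

Lemma analytic_comp f g : analytic f -> analytic g -> analytic (fun x => f (g x)).
Proof.
  intros Hf Hg x0. destruct (Hg x0) as [b [rg Hb]], (Hf (g x0)) as [a [rf Ha]].
  exact (is_pseries_near_comp f g x0 a b rf rg Ha Hb).
Qed.

Lemma realization_axis_analytic rho d Ns A b : analytic rho ->
  analytic (fun t => realization rho d Ns A b (axis_point t)).
Proof.
  intros Hrho. apply realization_axis_closed.
  - apply analytic_ext.
  - apply analytic_const.
  - apply analytic_id.
  - apply analytic_plus.
  - apply analytic_scal.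
  - intros f. apply analytic_comp, Hrho.
Qed.

Lemma is_pseries_near_is_derive f x0 a r : is_pseries_near f x0 a r ->
  forall y, Rabs (y - x0) < r -> is_derive f y (PSeries (PS_derive a) (y - x0)).
Proof.
  intros Hf y Hy. pose proof (is_pseries_near_CV_radius f x0 a r Hf) as Ra.
  destruct Hf as [Hr Hrep].
  apply (is_derive_ext_loc (fun t => PSeries a (t - x0))).
  - apply (locally_eq_on_interval _ _ (x0 - r) (x0 + r)).
    + apply Rabs_def2 in Hy. lra.
    + intros t Ht. apply is_pseries_unique, Hrep, Rabs_def1; lra.
  - replace (PSeries (PS_derive a) (y - x0)) with (1 * PSeries (PS_derive a) (y - x0)) by ring.
    apply (is_derive_comp (PSeries a) (fun t => t - x0) y).
    + apply is_derive_PSeries, (Rbar_lt_of_le_lt r); auto.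
    + auto_derive; auto.
Qed.

Lemma is_C1_of_analytic f : analytic f -> is_C1 f.
Proof.
  intros Hf. split.
  - intros x. destruct (Hf x) as [a [r Har]]. exists (PSeries (PS_derive a) (x - x)).
    apply (is_pseries_near_is_derive f x a r Har). rewrite Rminus_diag, Rabs_R0. apply Har.
  - intros x. destruct (Hf x) as [a [r Har]].
    assert (Ra : Rbar_le r (CV_radius a)) by (apply (is_pseries_near_CV_radius f x); auto).
    apply (continuous_ext_loc _ (fun y => PSeries (PS_derive a) (y - x))).
    + apply (locally_eq_on_interval _ _ (x - r) (x + r)); [destruct Har; lra|].
      intros y Hy. symmetry. apply is_derive_unique.
      apply (is_pseries_near_is_derive f x a r Har), Rabs_def1; lra.
    + apply (continuous_comp (fun y => y - x) (PSeries (PS_derive a))).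
      * apply (continuous_plus (fun y => y) (fun _ => - x));
          [apply continuous_id | apply continuous_const].
      * apply continuity_pt_filterlim, PSeries_continuity. rewrite CV_radius_derive.
        apply (Rbar_lt_of_le_lt r); auto. rewrite Rminus_diag, Rabs_R0. apply Har.
Qed.

Lemma eq_0_of_vanish_left (D : R -> R) e : continuous D 0 -> 0 < e ->
  (forall u, -e < u < 0 -> D u = 0) -> D 0 = 0.
Proof.
  intros Hc He H. destruct (Req_dec (D 0) 0) as [E|E]; auto. exfalso.
  destruct (continuous_eps_delta D 0 Hc (Rabs (D 0)) (Rabs_pos_lt _ E)) as [del [Hdel Hd]].
  set (u := - Rmin del e / 2).
  pose proof (Rmin_l del e). pose proof (Rmin_r del e).
  assert (Hpos : 0 < Rmin del e) by (apply Rmin_glb_lt; auto).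
  specialize (Hd u ltac:(unfold u; rewrite Rminus_0_r, Rabs_left; lra)).
  rewrite H in Hd by (unfold u; lra). rewrite Rminus_0_l, Rabs_Ropp in Hd. lra.
Qed.

(* Every derivative of [PSeries a] vanishes on a left neighbourhood of [0], hence at [0]
   by continuity, and the [n]-th one at [0] is [n! a n]. *)
Lemma is_pseries_near_coef_eq_0 h m a r e : is_pseries_near h m a r -> 0 < e ->
  (forall t, m - e < t < m -> h t = 0) -> forall n, a n = 0.
Proof.
  intros Hh He Hz n. pose proof (is_pseries_near_CV_radius h m a r Hh) as Ra.
  destruct Hh as [Hr Hrep].
  set (e' := Rmin e r).
  assert (He'e : e' <= e) by apply Rmin_l. assert (He'r : e' <= r) by apply Rmin_r.
  assert (He' : 0 < e') by (apply Rmin_glb_lt; auto).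
  assert (HP0 : forall u, -e' < u < 0 -> PSeries a u = 0).
  { intros u Hu. apply is_pseries_unique.
    specialize (Hrep (m + u) ltac:(replace (m + u - m) with u by ring; rewrite Rabs_left; lra)).
    replace (m + u - m) with u in Hrep by ring. rewrite Hz in Hrep by lra. exact Hrep. }
  assert (HD : forall u, -e' < u < 0 -> Derive_n (PSeries a) n u = 0).
  { intros u Hu. rewrite (Derive_n_ext_loc _ (fun _ => 0)).
    - destruct n; [reflexivity | apply Derive_n_const].
    - apply (locally_eq_on_interval _ _ (-e') 0); [exact Hu|]. intros y Hy. apply HP0, Hy. }
  assert (Hc : continuous (Derive_n (PSeries a) n) 0).
  { apply (continuous_ext_loc _ (PSeries (PS_derive_n n a))).
    - apply (locally_eq_on_interval _ _ (-e') e'); [lra|]. intros y Hy.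
      symmetry. apply Derive_n_PSeries, (Rbar_lt_of_le_lt r); auto. apply Rabs_def1; lra.
    - apply continuity_pt_filterlim, PSeries_continuity. rewrite CV_radius_derive_n.
      apply (Rbar_lt_of_le_lt r); auto. rewrite Rabs_R0; auto. }
  pose proof (eq_0_of_vanish_left _ e' Hc He' HD) as HD0.
  rewrite Derive_n_coef in HD0
    by (rewrite <- Rabs_R0; apply (Rbar_lt_of_le_lt r); auto; rewrite Rabs_R0; auto).
  apply Rmult_integral in HD0. destruct HD0 as [HD0|HD0]; auto.
  exfalso. exact (INR_fact_neq_0 n HD0).
Qed.

(* Identity theorem on the right half-line: the supremum of the zero segments [[0, s]]
   cannot be finite, since [h] is also zero on a ball around it. *)
Lemma analytic_eq_0_on_nonneg h B : analytic h -> 0 < B ->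
  (forall t, -B < t < B -> h t = 0) -> forall t, 0 <= t -> h t = 0.
Proof.
  intros Ha HB Hz. apply NNPP. intros Hno. apply not_all_ex_not in Hno.
  destruct Hno as [t1 Ht1]. apply imply_to_and in Ht1. destruct Ht1 as [Ht1 Hh1].
  set (E := fun s => 0 <= s /\ forall t, 0 <= t <= s -> h t = 0).
  assert (Hbd : bound E).
  { exists t1. intros s [Hs Hst]. apply Rnot_lt_le. intros G. apply Hh1, Hst. lra. }
  assert (HE0 : exists x, E x) by (exists 0; split; [lra|]; intros t Ht; apply Hz; lra).
  destruct (completeness E Hbd HE0) as [m [Hub Hleast]].
  assert (HmB : B / 2 <= m) by (apply Hub; split; [lra|]; intros t Ht; apply Hz; lra).
  assert (Hbelow : forall t, 0 <= t < m -> h t = 0).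
  { intros t Ht. apply NNPP. intros Hne.
    assert (is_upper_bound E t).
    { intros s [Hs Hst]. apply Rnot_lt_le. intros G. apply Hne, Hst. lra. }
    specialize (Hleast t H). lra. }
  destruct (Ha m) as [a [r Har]].
  assert (Ha0 : forall n, a n = 0).
  { apply (is_pseries_near_coef_eq_0 h m a r m Har ltac:(lra)).
    intros t Ht. apply Hbelow. lra. }
  destruct Har as [Hr Hrep].
  assert (Hball : forall x, Rabs (x - m) < r -> h x = 0).
  { intros x Hx. rewrite <- (is_pseries_unique _ _ _ (Hrep x Hx)).
    apply is_pseries_unique, (is_pseries_ext (const_seq 0)); [|apply is_pseries_const_seq].
    intros n. rewrite Ha0. unfold const_seq. destruct (Nat.eqb n 0); auto. }
  assert (HE : E (m + r / 2)).
  { split; [lra|]. intros t Ht. destruct (Rlt_dec t m) as [G|G].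
    - apply Hbelow. lra.
    - apply Hball, Rabs_def1; lra. }
  specialize (Hub _ HE). lra.
Qed.

(** * Case (i): [C^1] but not [C^oo] *)

Definition Ck_at (k : nat) (f : R -> R) (x : R) : Prop :=
  (forall m, (m <= k)%nat -> ex_derive_n f m x) /\ continuous (Derive_n f k) x.

Lemma Cinf_of_constant_fun f : constant_fun f -> Cinf f.
Proof.
  intros Hc k. apply Ck_of_Ck_rec.
  apply (Ck_rec_ext k (fun _ => f 0)); [intros x; apply Hc | apply Ck_rec_const].
Qed.

Lemma exists_not_Ck_at f : Ck 1 f -> ~ Cinf f ->
  exists k z, (1 <= k)%nat /\ Ck k f /\ ~ Ck_at (S k) f z.
Proof.
  intros H1 Hinf.
  assert (Hk : exists k, (1 <= k)%nat /\ Ck k f /\ ~ Ck (S k) f).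
  { apply NNPP. intros Hno. apply Hinf. intros k.
    assert (G : forall j, Ck (S j) f).
    { induction j as [|j IH]; auto.
      apply NNPP. intros Hj. apply Hno. exists (S j). split; [lia | auto]. }
    destruct k as [|k]; auto.
    apply Ck_of_Ck_rec, (Ck_rec_le 0 1); [lia | apply Ck_rec_of_Ck, H1]. }
  destruct Hk as [k [Hk1 [Hk HnSk]]]. exists k.
  apply NNPP. intros Hno. apply HnSk. split.
  - intros m x Hm. apply NNPP. intros Hx. apply Hno. exists x. refine (conj Hk1 (conj Hk _)).
    intros [Ha _]. apply Hx, Ha, Hm.
  - intros x. apply NNPP. intros Hx. apply Hno. exists x. refine (conj Hk1 (conj Hk _)).
    intros [_ Hb]. apply Hx, Hb.
Qed.

Lemma Ck_at_S_of_Derive_near f psi k z B : is_C1 f -> 0 < B -> Ck_rec k psi ->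
  (forall y, z - B < y < z + B -> Derive f y = psi y) -> Ck_at (S k) f z.
Proof.
  intros H1 HB Hpsi Heq. destruct (Ck_of_Ck_rec k psi Hpsi) as [Cp1 Cp2].
  assert (Hloc : forall y, z - B < y < z + B -> locally y (fun t => psi t = Derive f t)).
  { intros y Hy. apply (locally_eq_on_interval _ _ (z - B) (z + B)); auto.
    intros t Ht. symmetry; auto. }
  split.
  - intros m Hm. destruct m as [|[|m]].
    + exact I.
    + apply (proj1 H1).
    + apply ex_derive_n_S_Derive, (ex_derive_n_ext_loc psi); [apply Hloc; lra|].
      apply Cp1. lia.
  - apply (continuous_ext (Derive_n (Derive f) k)).
    { intros t. symmetry. apply Derive_n_S_Derive. }
    apply (continuous_ext_loc _ (Derive_n psi k)); [|apply Cp2].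
    apply (locally_eq_on_interval _ _ (z - B) (z + B)); [lra|].
    intros y Hy. apply Derive_n_ext_loc, Hloc, Hy.
Qed.

(* The difference quotients of [rho] at [u + z] are two-neuron sums converging to
   [Derive rho (u + z)]; a realization equal to it near [0] would make [rho] [C^(k+1)]
   at [z]. *)
Lemma not_closed_of_C1_not_Cinf d Ns B rho : (1 <= d)%nat -> Ns <> nil ->
  (forall N, In N Ns -> (1 <= N)%nat) -> 0 < B ->
  (2 <= last Ns 0%nat)%nat -> Ck 1 rho -> ~ Cinf rho ->
  RNN_not_closed rho d Ns B.
Proof.
  intros Hd Hne HN HB H2 HC1 Hinf.
  assert (H1 : is_C1 rho) by apply is_C1_of_Ck_rec, Ck_rec_of_Ck, HC1.
  destruct (exists_not_Ck_at rho HC1 Hinf) as [k [z [Hk1 [Hk Hz]]]].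
  set (hn := fun n : nat => / (INR n + 1)).
  apply (not_closed_of_two_neuron_limit rho d Ns B (fun u => Derive rho (u + z))
          (fun _ => 1) (fun n => z + hn n) (fun _ => 1) (fun _ => z)
          (fun n => INR n + 1) (fun n => - (INR n + 1)) (fun _ => 0)); auto.
  - intros Hc. apply Hinf, Cinf_of_constant_fun, Hc.
  - intros x. apply (continuous_comp (fun u => u + z) (Derive rho)); [|apply H1].
    apply (continuous_plus (fun u => u) (fun _ => z));
      [apply continuous_id | apply continuous_const].
  - set (K := B + 1 + Rabs z + 1).
    assert (HK : 1 <= K) by (unfold K; pose proof (Rabs_pos z); lra).
    apply (unif_conv_on_ext _
      (fun n u => (rho ((u + z) + / (INR n + 1) * 1) - rho (u + z)) * (INR n + 1))).
    { intros n u _. unfold hn. rewrite !Rmult_1_l, Rmult_1_r.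
      replace (u + (z + / (INR n + 1))) with (u + z + / (INR n + 1)) by ring. ring. }
    intros eta Heta.
    destruct (difference_quotient_unif_conv rho K H1 ltac:(lra) eta Heta) as [N HNq].
    exists N. intros n Hn u Hu. rewrite <- (Rmult_1_r (Derive rho (u + z))).
    apply HNq; auto; [|rewrite Rabs_R1; lra].
    eapply Rle_trans; [apply Rabs_triang|]. unfold K. lra.
  - intros [A [b HAb]].
    apply Hz, (Ck_at_S_of_Derive_near rho
      (fun y => realization rho d Ns A b (axis_point (y + - z))) k z B H1 HB).
    + apply (Ck_rec_comp k (fun t => realization rho d Ns A b (axis_point t)) (fun y => y + - z)).
      * apply realization_axis_Ck_rec, Ck_rec_of_Ck, Hk.
      * apply Ck_rec_plus; [apply Ck_rec_id | apply Ck_rec_const].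
    + intros y Hy. rewrite <- HAb by (apply in_cube_axis_point, Rabs_le; lra).
      unfold axis_point. simpl. f_equal. ring.
Qed.

(** * Case (ii): bounded, analytic and not constant *)

(* A realization agreeing with [d0 * t] on [(-B, B)] agrees with it on [[0, +oo)] by
   analyticity, which contradicts its boundedness. *)
Lemma linear_not_in_RNN rho d Ns B d0 : Ns <> nil -> 0 < B ->
  bounded_fun rho -> analytic rho -> d0 <> 0 ->
  ~ in_RNN rho d Ns B (fun x => d0 * x 0%nat).
Proof.
  intros Hne HB [M HM] Han Hd0 [A [b HAb]].
  set (F := fun t => realization rho d Ns A b (axis_point t)).
  destruct (realization_axis_bounded rho d Ns A b M Hne HM) as [Mb HMb].
  assert (Hh : analytic (fun t => F t + (- d0) * t)).
  { apply analytic_plus; [apply realization_axis_analytic, Han|].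
    apply analytic_scal, analytic_id. }
  assert (Hid : forall t, 0 <= t -> F t + - d0 * t = 0).
  { apply (analytic_eq_0_on_nonneg _ B Hh HB). intros t Ht.
    unfold F. rewrite <- HAb by (apply in_cube_axis_point, Rabs_le; lra).
    unfold axis_point. simpl. ring. }
  assert (HMb0 : 0 <= Mb) by (eapply Rle_trans; [apply Rabs_pos | apply (HMb 0)]).
  assert (Hdz : 0 < Rabs d0) by (apply Rabs_pos_lt; auto).
  set (t := (Mb + 1) / Rabs d0).
  assert (Ht : 0 <= t)
    by (unfold t; apply Rmult_le_pos; [lra | left; apply Rinv_0_lt_compat; auto]).
  specialize (Hid t Ht). specialize (HMb t). fold (F t) in HMb.
  replace (F t) with (d0 * t) in HMb by lra.
  rewrite Rabs_mult, (Rabs_pos_eq t) in HMb by auto. unfold t in HMb.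
  replace (Rabs d0 * ((Mb + 1) / Rabs d0)) with (Mb + 1) in HMb by (field; lra). lra.
Qed.

Lemma not_closed_of_bounded_analytic d Ns B rho : (1 <= d)%nat -> Ns <> nil ->
  (forall N, In N Ns -> (1 <= N)%nat) -> 0 < B ->
  (2 <= last Ns 0%nat)%nat -> bounded_fun rho -> analytic rho -> ~ constant_fun rho ->
  RNN_not_closed rho d Ns B.
Proof.
  intros Hd Hne HN HB H2 Hbd Han Hnc.
  assert (H1 : is_C1 rho) by (apply is_C1_of_analytic, Han).
  destruct (exists_Derive_neq_0 rho (proj1 H1) Hnc) as [z0 Hz0].
  set (d0 := Derive rho z0) in *.
  apply (not_closed_of_two_neuron_limit rho d Ns B (fun u => d0 * u)
          (fun n => / (INR n + 1)) (fun _ => z0) (fun _ => 0) (fun _ => 0)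
          (fun n => INR n + 1) (fun _ => 0) (fun n => - (INR n + 1) * rho z0)); auto.
  - intros x. apply (continuous_mult (fun _ => d0) (fun u => u));
      [apply continuous_const | apply continuous_id].
  - set (K := Rmax (B + 1) (Rabs z0)).
    assert (HK : 0 <= K) by (unfold K; apply Rmax_Rle; right; apply Rabs_pos).
    apply (unif_conv_on_ext _
      (fun n u => (rho (z0 + / (INR n + 1) * u) - rho z0) * (INR n + 1))).
    { intros n u _. simpl. rewrite (Rplus_comm z0). ring. }
    intros eta Heta.
    destruct (difference_quotient_unif_conv rho K H1 HK eta Heta) as [N HNq].
    exists N. intros n Hn u Hu. apply HNq; auto; [apply Rmax_r|].
    unfold K. apply Rmax_Rle. auto.
  - apply linear_not_in_RNN; auto.
Qed.

(** * Case (iii): approximately homogeneous of order [(r, q)] with [r <> q] *)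

(* For [sigma = 1] this is [max(u, 0) ^ m], for [sigma = -1] it is [min(u, 0) ^ m]. *)
Definition one_sided_power (sigma : R) (m : nat) (u : R) : R := ((u + sigma * Rabs u) / 2) ^ m.

Lemma one_sided_power_continuous sigma m x : continuous (one_sided_power sigma m) x.
Proof.
  apply (Ck_rec_comp 0 (fun y => y ^ m) (fun u => (u + sigma * Rabs u) / 2)).
  - apply Ck_rec_pow.
  - apply (Ck_rec_mult 0 (fun u => u + sigma * Rabs u) (fun _ => / 2)); [|apply Ck_rec_const].
    apply Ck_rec_plus; [apply Ck_rec_id|].
    apply Ck_rec_mult; [apply Ck_rec_const | intros y; apply continuous_Rabs].
Qed.

Lemma one_sided_power_on sigma m u : sigma = 1 \/ sigma = -1 -> 0 <= sigma * u ->
  one_sided_power sigma m u = u ^ m.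
Proof.
  intros Hs Hu. unfold one_sided_power. f_equal.
  destruct Hs as [-> | ->]; [rewrite Rabs_pos_eq | rewrite Rabs_left1]; lra.
Qed.

Lemma one_sided_power_off sigma m u : sigma = 1 \/ sigma = -1 -> (1 <= m)%nat ->
  sigma * u <= 0 -> one_sided_power sigma m u = 0.
Proof.
  intros Hs Hm Hu. unfold one_sided_power.
  replace ((u + sigma * Rabs u) / 2) with 0; [apply pow_i; lia|].
  destruct Hs as [-> | ->]; [rewrite Rabs_left1 | rewrite Rabs_pos_eq]; lra.
Qed.

Lemma scaled_power_close rho s N u m : 1 <= N -> (1 <= m)%nat ->
  Rabs (rho (N * u) - (N * u) ^ m) <= s -> Rabs (/ N ^ m * rho (N * u) - u ^ m) <= s / N.
Proof.
  intros HN Hm H. rewrite Rpow_mult_distr in H.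
  assert (HNm : N <= N ^ m) by (pose proof (Rle_pow N 1 m HN Hm); simpl in *; lra).
  replace (/ N ^ m * rho (N * u) - u ^ m) with (/ N ^ m * (rho (N * u) - N ^ m * u ^ m))
    by (field; lra).
  rewrite Rabs_mult, Rabs_inv, (Rabs_pos_eq (N ^ m)) by lra.
  assert (0 <= s) by (eapply Rle_trans; [apply Rabs_pos | exact H]).
  unfold Rdiv. rewrite Rmult_comm.
  apply Rmult_le_compat; try lra; [apply Rabs_pos | left; apply Rinv_0_lt_compat; lra|].
  apply Rinv_le_contravar; lra.
Qed.

Lemma scaled_lower_power_small rho s N u m o K : 1 <= N -> (o < m)%nat ->
  Rabs u <= K -> 1 <= K -> Rabs (rho (N * u) - (N * u) ^ o) <= s ->
  Rabs (/ N ^ m * rho (N * u)) <= (s + K ^ o) / N.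
Proof.
  intros HN Hom Hu HK H.
  assert (0 <= s) by (eapply Rle_trans; [apply Rabs_pos | exact H]).
  assert (HNo : 1 <= N ^ o) by (apply pow_R1_Rle; lra).
  assert (Hr : Rabs (rho (N * u)) <= N ^ o * (s + K ^ o)).
  { replace (rho (N * u)) with ((rho (N * u) - (N * u) ^ o) + (N * u) ^ o) by ring.
    eapply Rle_trans; [apply Rabs_triang|].
    rewrite Rpow_mult_distr in H |- *.
    rewrite Rabs_mult, (Rabs_pos_eq (N ^ o)), <- RPow_abs by lra.
    assert (Rabs u ^ o <= K ^ o) by (apply pow_incr; split; [apply Rabs_pos | auto]).
    assert (N ^ o * Rabs u ^ o <= N ^ o * K ^ o) by (apply Rmult_le_compat_l; lra).
    assert (s <= N ^ o * s) by (rewrite <- (Rmult_1_l s) at 1; apply Rmult_le_compat_r; lra).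
    rewrite Rmult_plus_distr_l. lra. }
  assert (HNm : N ^ m = N ^ o * N ^ (m - o)) by (rewrite <- pow_add; f_equal; lia).
  assert (HN2 : N <= N ^ (m - o))
    by (pose proof (Rle_pow N 1 (m - o) HN ltac:(lia)); simpl in *; lra).
  rewrite Rabs_mult, Rabs_inv, (Rabs_pos_eq (N ^ m)), HNm by (apply pow_le; lra).
  apply Rle_trans with (/ (N ^ o * N ^ (m - o)) * (N ^ o * (s + K ^ o))).
  { apply Rmult_le_compat_l; auto. left; apply Rinv_0_lt_compat. nra. }
  replace (/ (N ^ o * N ^ (m - o)) * (N ^ o * (s + K ^ o))) with ((s + K ^ o) * / N ^ (m - o))
    by (field; lra).
  unfold Rdiv. apply Rmult_le_compat_l; [pose proof (pow_le K o); lra|].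
  apply Rinv_le_contravar; lra.
Qed.

Lemma one_sided_power_unif_limit rho sigma m o s K : sigma = 1 \/ sigma = -1 ->
  (o < m)%nat -> 1 <= K ->
  (forall x, 0 <= sigma * x -> Rabs (rho x - x ^ m) <= s) ->
  (forall x, sigma * x <= 0 -> Rabs (rho x - x ^ o) <= s) ->
  unif_conv_on K (fun n u => / (INR n + 1) ^ m * rho ((INR n + 1) * u)) (one_sided_power sigma m).
Proof.
  intros Hs Hom HK Hon Hoff eta Heta.
  assert (Hs0 : 0 <= s) by (eapply Rle_trans; [apply Rabs_pos | apply (Hon 0); lra]).
  set (C := s + K ^ o + 1).
  assert (HC : 0 < C) by (unfold C; pose proof (pow_le K o); lra).
  destruct (inv_INR_S_eventually_lt (eta / C) ltac:(apply Rdiv_lt_0_compat; auto)) as [N HN].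
  exists N. intros n Hn u Hu. specialize (HN n Hn).
  set (Nn := INR n + 1) in *.
  assert (HN1 : 1 <= Nn) by (unfold Nn; pose proof (pos_INR n); lra).
  assert (HCN : C / Nn <= eta).
  { apply (Rmult_lt_compat_l C) in HN; auto. unfold Rdiv in *.
    replace (C * (eta * / C)) with eta in HN by (field; lra). lra. }
  assert (Hsign : sigma * (Nn * u) = Nn * (sigma * u)) by ring.
  apply Rle_trans with (C / Nn); auto.
  apply Rle_trans with ((s + K ^ o) / Nn);
    [|unfold Rdiv; apply Rmult_le_compat_r; [left; apply Rinv_0_lt_compat|]; unfold C; lra].
  destruct (Rle_dec 0 (sigma * u)) as [Hu0|Hu0].
  - rewrite one_sided_power_on by auto.
    eapply Rle_trans; [apply scaled_power_close; [lra | lia |] |].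
    + apply Hon. rewrite Hsign. apply Rmult_le_pos; lra.
    + unfold Rdiv. apply Rmult_le_compat_r; [left; apply Rinv_0_lt_compat; lra|].
      pose proof (pow_le K o); lra.
  - rewrite one_sided_power_off, Rminus_0_r by (auto; lia || lra).
    apply (scaled_lower_power_small rho s Nn u m o K); auto.
    apply Hoff. rewrite Hsign. apply Rmult_le_0_l; lra.
Qed.

Lemma is_derive_eq_0_of_vanish_left (f : R -> R) l e : is_derive f 0 l -> 0 < e ->
  (forall t, -e < t <= 0 -> f t = 0) -> l = 0.
Proof.
  intros Hf He Hz. apply is_derive_Reals in Hf.
  destruct (Req_dec l 0) as [E|E]; auto. exfalso.
  destruct (Hf (Rabs l) (Rabs_pos_lt _ E)) as [del Hd].
  set (h := - Rmin del e / 2).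
  pose proof (Rmin_l del e). pose proof (Rmin_r del e). pose proof (cond_pos del).
  assert (Hm : 0 < Rmin del e) by (apply Rmin_glb_lt; auto).
  specialize (Hd h ltac:(unfold h; lra) ltac:(unfold h; rewrite Rabs_left; lra)).
  rewrite Rplus_0_l, !Hz in Hd by (unfold h; lra).
  unfold Rdiv in Hd. rewrite Rminus_diag, Rmult_0_l, Rminus_0_l, Rabs_Ropp in Hd. lra.
Qed.

(* Applied to [D - c1 id] on the left of [0] and to [t |-> D (-t) + c2 t] on the right. *)
Lemma not_ex_derive_kink (D : R -> R) c1 c2 e : 0 < e ->
  (forall t, -e < t < 0 -> D t = c1 * t) -> (forall t, 0 < t < e -> D t = c2 * t) ->
  c1 <> c2 -> ~ ex_derive D 0.
Proof.
  intros He H1 H2 Hc [l Hl].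
  assert (Hid : forall x : R, is_derive (fun t : R => t) x 1) by (intros x; apply (is_derive_id x)).
  assert (Hl1 : is_derive (fun t => D t - c1 * t) 0 (l - c1 * 1)).
  { apply (is_derive_minus D (fun t => c1 * t));
      [exact Hl | apply (is_derive_scal (fun t => t)), Hid]. }
  assert (HD0 : D 0 - c1 * 0 = 0).
  { apply (eq_0_of_vanish_left (fun t => D t - c1 * t) e); auto.
    - apply (@ex_derive_continuous R_AbsRing R_NormedModule). eexists. exact Hl1.
    - intros u Hu. cbv beta. rewrite H1; [ring | lra]. }
  assert (E1 : l - c1 * 1 = 0).
  { apply (is_derive_eq_0_of_vanish_left _ _ e Hl1 He). intros t Ht. cbv beta.
    destruct (Req_dec t 0) as [->|Ht0]; [exact HD0 | rewrite H1; [ring | lra]]. }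
  assert (Hl2 : is_derive (fun t => D (- t) + c2 * t) 0 (-1 * l + c2 * 1)).
  { apply (is_derive_plus (fun t => D (- t)) (fun t => c2 * t));
      [|apply (is_derive_scal (fun t => t)), Hid].
    apply (is_derive_comp D Ropp); [rewrite Ropp_0; exact Hl | auto_derive; auto; ring]. }
  assert (E2 : -1 * l + c2 * 1 = 0).
  { apply (is_derive_eq_0_of_vanish_left _ _ e Hl2 He). intros t Ht. cbv beta.
    destruct (Req_dec t 0) as [->|Ht0].
    - rewrite Ropp_0. lra.
    - rewrite H2; [ring | lra]. }
  apply Hc. lra.
Qed.

Lemma not_in_RNN_of_kink rho d Ns B m (Phi g1 g2 : R -> R) c1 c2 :
  0 < B -> (1 <= m)%nat -> Ck_rec m rho ->
  (forall y, -B < y < 0 -> Phi y = g1 y) -> (forall y, 0 < y < B -> Phi y = g2 y) ->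
  (forall t, Derive_n g1 (m - 1) t = c1 * t) -> (forall t, Derive_n g2 (m - 1) t = c2 * t) ->
  c1 <> c2 -> ~ in_RNN rho d Ns B (fun x => Phi (x 0%nat)).
Proof.
  intros HB Hm HP H1 H2 D1 D2 Hc [A [b HAb]].
  set (F := fun t => realization rho d Ns A b (axis_point t)).
  assert (HF : forall t, -B < t < B -> F t = Phi t).
  { intros t Ht. unfold F. rewrite <- HAb by (apply in_cube_axis_point, Rabs_le; lra).
    reflexivity. }
  destruct (Ck_of_Ck_rec m F (realization_axis_Ck_rec m rho d Ns A b HP)) as [CF _].
  apply (not_ex_derive_kink (Derive_n F (m - 1)) c1 c2 B HB); auto.
  - intros t Ht. rewrite <- D1. apply Derive_n_ext_loc.
    apply (locally_eq_on_interval _ _ (-B) 0); auto.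
    intros y Hy. rewrite HF by lra. apply H1. lra.
  - intros t Ht. rewrite <- D2. apply Derive_n_ext_loc.
    apply (locally_eq_on_interval _ _ 0 B); auto.
    intros y Hy. rewrite HF by lra. apply H2. lra.
  - specialize (CF m 0 (le_n m)). replace m with (S (m - 1)) in CF at 1 by lia. exact CF.
Qed.

Lemma one_sided_power_not_in_RNN rho d Ns B sigma m : sigma = 1 \/ sigma = -1 ->
  0 < B -> (1 <= m)%nat -> Ck_rec m rho ->
  ~ in_RNN rho d Ns B (fun x => one_sided_power sigma m (x 0%nat)).
Proof.
  intros Hs HB Hm HP.
  assert (Dpow : forall t, Derive_n (fun y => y ^ m) (m - 1) t = INR (fact m) * t).
  { intros t. rewrite Derive_n_pow_smalli by lia.
    replace (m - (m - 1))%nat with 1%nat by lia. simpl. field. }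
  assert (D0 : forall t, Derive_n (fun _ => 0) (m - 1) t = 0 * t).
  { intros t. rewrite Rmult_0_l. destruct (m - 1)%nat; [reflexivity | apply Derive_n_const]. }
  pose proof (INR_fact_neq_0 m).
  destruct Hs as [Hs | Hs].
  - apply (not_in_RNN_of_kink rho d Ns B m _ (fun _ => 0) (fun y => y ^ m) 0 (INR (fact m)));
      auto; intros y Hy.
    + apply one_sided_power_off; auto. subst sigma. lra.
    + apply one_sided_power_on; auto. subst sigma. lra.
  - apply (not_in_RNN_of_kink rho d Ns B m _ (fun y => y ^ m) (fun _ => 0) (INR (fact m)) 0);
      auto; intros y Hy.
    + apply one_sided_power_on; auto. subst sigma. lra.
    + apply one_sided_power_off; auto. subst sigma. lra.
Qed.

(* A constant [c] cannot stay within [s] of [x ^ p], [p >= 1], on a half-line: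
   evaluate at a point of absolute value [|c| + s + 1]. *)
Lemma approx_homogeneous_not_constant r q rho : r <> q -> approx_homogeneous r q rho ->
  ~ constant_fun rho.
Proof.
  intros Hrq [s [Hs [Hp Hn]]] Hc.
  set (t := Rabs (rho 0) + s + 1).
  assert (Ht : 1 <= t) by (unfold t; pose proof (Rabs_pos (rho 0)); lra).
  assert (Hfar : forall x p, (1 <= p)%nat -> Rabs x = t -> Rabs (rho 0 - x ^ p) <= s -> False).
  { intros x p Hp1 Hx H.
    assert (t <= Rabs (x ^ p)).
    { rewrite <- RPow_abs, Hx. pose proof (Rle_pow t 1 p Ht Hp1). simpl in *. lra. }
    assert (Rabs (x ^ p) <= Rabs (rho 0 - x ^ p) + Rabs (rho 0)).
    { replace (x ^ p) with (-(rho 0 - x ^ p) + rho 0) at 1 by ring.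
      eapply Rle_trans; [apply Rabs_triang|]. rewrite Rabs_Ropp. lra. }
    unfold t in *. lra. }
  destruct (Nat.eq_dec r 0) as [Hr0|Hr0].
  - apply (Hfar (- t) q); [lia | rewrite Rabs_Ropp, Rabs_pos_eq; lra|].
    rewrite (Hc 0 (- t)). apply Hn. lra.
  - apply (Hfar t r); [lia | rewrite Rabs_pos_eq; lra|].
    rewrite (Hc 0 t). apply Hp. lra.
Qed.

(* [rho (n u) / n ^ max(r, q)] converges to the one-sided power on the side of the
   larger exponent. *)
Lemma not_closed_of_approx_homogeneous d Ns B rho r q : (1 <= d)%nat -> Ns <> nil ->
  (forall N, In N Ns -> (1 <= N)%nat) -> 0 < B ->
  r <> q -> approx_homogeneous r q rho -> Ck (Nat.max r q) rho ->
  RNN_not_closed rho d Ns B.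
Proof.
  intros Hd Hne HN HB Hrq Hhom HC.
  set (m := Nat.max r q) in *.
  assert (Hm : (1 <= m)%nat) by (unfold m; lia).
  assert (Pm : Ck_rec m rho) by (apply Ck_rec_of_Ck, HC).
  assert (H1 : is_C1 rho) by (apply is_C1_of_Ck_rec, (Ck_rec_le 1 m); auto).
  assert (Hside : exists sigma o s, (sigma = 1 \/ sigma = -1) /\ (o < m)%nat /\
      (forall x, 0 <= sigma * x -> Rabs (rho x - x ^ m) <= s) /\
      (forall x, sigma * x <= 0 -> Rabs (rho x - x ^ o) <= s)).
  { destruct Hhom as [s [_ [Hp Hn]]].
    destruct (Compare_dec.lt_dec q r) as [Hqr|Hqr].
    - exists 1, q, s. replace m with r by (unfold m; lia).
      repeat split; auto; intros x Hx; [apply Hp | apply Hn]; lra.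
    - exists (-1), r, s. replace m with q by (unfold m; lia).
      repeat split; auto; [lia | |]; intros x Hx; [apply Hn | apply Hp]; lra. }
  destruct Hside as [sigma [o [s [Hs [Hom [Hon Hoff]]]]]].
  apply (not_closed_of_two_neuron_limit rho d Ns B (one_sided_power sigma m)
          (fun n => INR n + 1) (fun _ => 0) (fun _ => 0) (fun _ => 0)
          (fun n => / (INR n + 1) ^ m) (fun _ => 0) (fun _ => 0)); auto.
  - apply (approx_homogeneous_not_constant r q); auto.
  - apply one_sided_power_continuous.
  - apply (unif_conv_on_ext _ (fun n u => / (INR n + 1) ^ m * rho ((INR n + 1) * u))).
    { intros n u _. rewrite !Rplus_0_r. ring. }
    apply (one_sided_power_unif_limit rho sigma m o s); auto. lra.
  - apply one_sided_power_not_in_RNN; auto.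
Qed.

Theorem theorem3p3 (d : nat) (Ns : list nat) (B : R) (rho : R -> R) :
  (1 <= d)%nat ->
  Ns <> nil ->
  (forall N, In N Ns -> (1 <= N)%nat) ->
  0 < B ->
  ( ((2 <= last Ns 0%nat)%nat /\ Ck 1 rho /\ ~ Cinf rho)
    \/ ((2 <= last Ns 0%nat)%nat /\ bounded_fun rho /\ analytic rho /\ ~ constant_fun rho)
    \/ (exists r q : nat, r <> q /\ approx_homogeneous r q rho /\ Ck (Nat.max r q) rho) ) ->
  RNN_not_closed rho d Ns B.
Proof.
  intros Hd Hne HN HB [[H2 [HC1 Hinf]] | [[H2 [Hbd [Han Hnc]]] | [r [q [Hrq [Hhom HC]]]]]].
  - apply not_closed_of_C1_not_Cinf; auto.
  - apply not_closed_of_bounded_analytic; auto.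
  - apply (not_closed_of_approx_homogeneous d Ns B rho r q); auto.
Qed.
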